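(* Assume $S^\perp(\mathcal T^\perp)=\{S^\perp y: y\in\mathcal T^\perp\}\neq\{0\}$ and define $$\nu:=\inf\Big\{\frac{\|T^\perp x\|}{\|x\|}:\ x\in S^\perp(\mathcal T^\perp),\ x\neq0\Big\}.$$ Then $\nu=\gamma(\mathcal S,\mathcal T^\perp)=\cos\theta_{\max}$.
   Context: $\mathcal H$ is a Hilbert space; $\mathcal S,\mathcal T\subseteq\mathcal H$ closed subspaces with orthogonal projectors $S,T$; $S^\perp=I-S$, $T^\perp=I-T$. For closed subspaces $\mathcal F,\mathcal G$ the minimal gap is $\gamma(\mathcal F,\mathcal G)=\inf_{g\in\mathcal F\setminus\mathcal G}\operatorname{dist}(g,\mathcal G)/\operatorname{dist}(g,\mathcal F\cap\mathcal G)$. With $P_{\mathcal F},P_{\mathcal G}$ the orthogonal projectors, the set of angles from $\mathcal F$ to $\mathcal G$ is $\hat\Theta(\mathcal F,\mathcal G)=\{\arccos\sigma:\ \sigma\ge0,\ \sigma^2\in\Sigma((P_{\mathcal F}P_{\mathcal G})|_{\mathcal F})\}$, where $\Sigma$ denotes the spectrum and $(\cdot)|_{\mathcal F}$ the restriction to $\mathcal F$; the angles between $\mathcal F$ and $\mathcal G$ are $\Theta(\mathcal F,\mathcal G)=\hat\Theta(\mathcal F,\mathcal G)\cap\hat\Theta(\mathcal G,\mathcal F)$. The largest nontrivial angle is $\theta_{\max}=\sup\big(\Theta(\mathcal S,\mathcal T)\setminus\{\pi/2\}\big)$, with the convention $\sup\emptyset=0$. *)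

From Stdlib Require Import Reals Lra ClassicalEpsilon.
Open Scope R_scope.

Record HilbertSpace := {
  hcar :> Type;
  hzero : hcar;
  hadd : hcar -> hcar -> hcar;
  hopp : hcar -> hcar;
  hscal : R -> hcar -> hcar;
  hinner : hcar -> hcar -> R;
  hadd_assoc : forall x y z, hadd x (hadd y z) = hadd (hadd x y) z;
  hadd_comm : forall x y, hadd x y = hadd y x;
  hadd_zero : forall x, hadd x hzero = x;
  hadd_opp : forall x, hadd x (hopp x) = hzero;
  hscal_assoc : forall a b x, hscal a (hscal b x) = hscal (a * b) x;
  hscal_one : forall x, hscal 1 x = x;
  hscal_distr_v : forall a x y, hscal a (hadd x y) = hadd (hscal a x) (hscal a y);
  hscal_distr_s : forall a b x, hscal (a + b) x = hadd (hscal a x) (hscal b x);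
  hinner_sym : forall x y, hinner x y = hinner y x;
  hinner_add : forall x y z, hinner (hadd x y) z = hinner x z + hinner y z;
  hinner_scal : forall a x y, hinner (hscal a x) y = a * hinner x y;
  hinner_pos : forall x, 0 <= hinner x x;
  hinner_def : forall x, hinner x x = 0 -> x = hzero;
  hcomplete : forall u : nat -> hcar,
    (forall eps, 0 < eps -> exists N, forall m n, (N <= m)%nat -> (N <= n)%nat ->
        sqrt (hinner (hadd (u m) (hopp (u n))) (hadd (u m) (hopp (u n)))) < eps) ->
    exists l, forall eps, 0 < eps -> exists N, forall n, (N <= n)%nat ->
        sqrt (hinner (hadd (u n) (hopp l)) (hadd (u n) (hopp l))) < eps
}.

Arguments hzero {_}.
Arguments hadd {_} _ _.
Arguments hopp {_} _.
Arguments hscal {_} _ _.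
Arguments hinner {_} _ _.

Definition hsub {H : HilbertSpace} (x y : H) : H := hadd x (hopp y).
Definition hnorm {H : HilbertSpace} (x : H) : R := sqrt (hinner x x).

(* Rsup E = least upper bound if E is nonempty and bounded above;
   convention sup of the empty set = 0 (as in the paper). *)
Definition Rsup (E : R -> Prop) : R :=
  match excluded_middle_informative (bound E /\ exists x, E x) with
  | left h => proj1_sig (completeness E (proj1 h) (proj2 h))
  | right _ => 0
  end.
Definition Rinf (E : R -> Prop) : R := - Rsup (fun x => E (- x)).

Definition seq_lim {H : HilbertSpace} (u : nat -> H) (l : H) : Prop :=
  forall eps, 0 < eps -> exists N, forall n, (N <= n)%nat -> hnorm (hsub (u n) l) < eps.

Definition closed_subspace {H : HilbertSpace} (F : H -> Prop) : Prop :=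
  F hzero /\
  (forall x y, F x -> F y -> F (hadd x y)) /\
  (forall a x, F x -> F (hscal a x)) /\
  (forall u l, (forall n, F (u n)) -> seq_lim u l -> F l).

Definition is_orth_proj {H : HilbertSpace} (F : H -> Prop) (P : H -> H) : Prop :=
  forall x, F (P x) /\ forall y, F y -> hinner (hsub x (P x)) y = 0.

Definition orth_compl {H : HilbertSpace} (F : H -> Prop) : H -> Prop :=
  fun y => forall x, F x -> hinner y x = 0.

Definition cap {H : HilbertSpace} (F G : H -> Prop) : H -> Prop :=
  fun x => F x /\ G x.

Definition dist {H : HilbertSpace} (g : H) (A : H -> Prop) : R :=
  Rinf (fun r => exists a, A a /\ r = hnorm (hsub g a)).

(* Kato's convention: gamma(F,G) = 1 when F is contained in G (F \ G empty). *)
Definition gamma {H : HilbertSpace} (F G : H -> Prop) : R :=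
  match excluded_middle_informative (forall g, F g -> G g) with
  | left _ => 1
  | right _ =>
      Rinf (fun r => exists g, F g /\ ~ G g /\ r = dist g G / dist g (cap F G))
  end.

Definition in_spectrum_restr {H : HilbertSpace} (A : H -> H) (F : H -> Prop) (lam : R) : Prop :=
  ~ exists B : H -> H,
      (forall x, F x -> F (B x)) /\
      (exists C, forall x, F x -> hnorm (B x) <= C * hnorm x) /\
      (forall x, F x -> B (hsub (A x) (hscal lam x)) = x) /\
      (forall x, F x -> hsub (A (B x)) (hscal lam (B x)) = x).

Definition hatTheta {H : HilbertSpace} (PF : H -> H) (F : H -> Prop) (PG : H -> H)
    (th : R) : Prop :=
  exists sigma, 0 <= sigma /\
    in_spectrum_restr (fun x => PF (PG x)) F (sigma ^ 2) /\ th = acos sigma.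

Definition Theta {H : HilbertSpace} (PF : H -> H) (F : H -> Prop)
    (PG : H -> H) (G : H -> Prop) (th : R) : Prop :=
  hatTheta PF F PG th /\ hatTheta PG G PF th.

Definition theta_max {H : HilbertSpace} (PS : H -> H) (S : H -> Prop)
    (PT : H -> H) (T : H -> Prop) : R :=
  Rsup (fun th => Theta PS S PT T th /\ th <> PI / 2).

(* Write A for S T restricted to the range of S; it is a positive contraction whose kernel
   there is K = S ∩ T^perp, and let M be the orthogonal complement of K in the range of S.
   Since dist(g, T^perp) = |T g|, the gap gamma = gamma(S, T^perp) is the best constant in
   gamma |w| <= |T w| on M, i.e. gamma^2 is the bottom of the spectrum of A on M.  Hence
   (0, gamma^2) is free of spectrum of A, while gamma^2 (or, if gamma = 0, arbitrarily small
   positive numbers) are approximate eigenvalues of A, and also of T S on the range of T;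
   this yields theta_max = arccos gamma.  For nu: an element x = y - S y with y in T^perp
   satisfies T x = - T (S y), and Cauchy-Schwarz gives gamma <= |x - T x| / |x|;
   conversely, for a unit approximate eigenvector v of A for lambda, y = v - T v produces
   such an x with ratio close to sqrt lambda.  Only completeness of the space is available,
   so the splitting K (+) M and the inverse of A - lambda on M are built from convergent
   iterations (of I - A, and a contraction fixed point). *)

From Pilot Require Import Defs.
From Stdlib Require Import Reals Lra Lia ClassicalEpsilon Classical.
Open Scope R_scope.

Lemma discriminant_le a b c :
  0 <= c -> (forall t, 0 <= a + 2 * b * t + c * t * t) -> b * b <= a * c.
Proof.
  intros Hc Ht. destruct Hc as [Hc|<-].
  - specialize (Ht (- b / c)).
    replace (a + 2 * b * (- b / c) + c * (- b / c) * (- b / c))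
      with ((a * c - b * b) / c) in Ht by (field; lra).
    apply Rmult_le_compat_r with (r := c) in Ht; [|lra].
    unfold Rdiv in Ht. rewrite Rmult_assoc, Rinv_l in Ht; lra.
  - destruct (Req_dec b 0) as [->|Hb]; [nra|].
    specialize (Ht (- (a + 1) / (2 * b))).
    replace (a + 2 * b * (- (a + 1) / (2 * b)) + 0 * (- (a + 1) / (2 * b)) * (- (a + 1) / (2 * b)))
      with (-1) in Ht by (field; lra).
    lra.
Qed.

Lemma le_of_sqr_le a b : 0 <= b -> a * a <= b * b -> a <= b.
Proof. intros Hb Hab. destruct (Rle_or_lt a b); auto. nra. Qed.

Lemma bounded_of_sqr_le a d : 0 <= d -> a * a <= d * d -> - d <= a <= d.
Proof. intros Hd Ha. split; apply Rnot_lt_le; intro; nra. Qed.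

Lemma sqrt_one_sub_bounds c : 0 < c <= 1 -> 0 <= sqrt (1 - c) < 1.
Proof.
  intro Hc. split; [apply sqrt_pos|].
  assert (h := sqrt_lt_1_alt (1 - c) 1 ltac:(lra)). rewrite sqrt_1 in h. exact h.
Qed.

Section InnerProduct.
Context {H : HilbertSpace}.
Implicit Types x y z u v w : H.

Lemma hinner_add_r x y z : hinner z (hadd x y) = hinner z x + hinner z y.
Proof. rewrite hinner_sym, hinner_add, (hinner_sym _ x), (hinner_sym _ y); ring. Qed.

Lemma hinner_scal_r a x y : hinner y (hscal a x) = a * hinner y x.
Proof. rewrite hinner_sym, hinner_scal, hinner_sym; ring. Qed.

Lemma hinner_zero_l y : hinner (@hzero H) y = 0.
Proof.
  assert (E : hinner (hadd (@hzero H) hzero) y = hinner (@hzero H) y) by (rewrite hadd_zero; auto).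
  rewrite hinner_add in E; lra.
Qed.

Lemma hinner_zero_r y : hinner y (@hzero H) = 0.
Proof. rewrite hinner_sym; apply hinner_zero_l. Qed.

Lemma hinner_opp_l x y : hinner (hopp x) y = - hinner x y.
Proof. assert (E := hinner_zero_l y). rewrite <- (hadd_opp _ x), hinner_add in E; lra. Qed.

Lemma hinner_opp_r x y : hinner y (hopp x) = - hinner y x.
Proof. rewrite hinner_sym, hinner_opp_l, hinner_sym; ring. Qed.

Lemma hinner_sub_l x y z : hinner (hsub x y) z = hinner x z - hinner y z.
Proof. unfold hsub; rewrite hinner_add, hinner_opp_l; ring. Qed.

Lemma hinner_sub_r x y z : hinner z (hsub x y) = hinner z x - hinner z y.
Proof. unfold hsub; rewrite hinner_add_r, hinner_opp_r; ring. Qed.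

Lemma hsub_eq0 x y : hsub x y = hzero -> x = y.
Proof.
  unfold hsub; intro E.
  rewrite <- (hadd_zero _ x), <- (hadd_opp _ y), (hadd_comm _ y), hadd_assoc, E,
    hadd_comm, hadd_zero; auto.
Qed.

Lemma hvec_ext u v : (forall w, hinner u w = hinner v w) -> u = v.
Proof. intro E. apply hsub_eq0, hinner_def. rewrite hinner_sub_l, E; ring. Qed.

Lemma hinner_pos_lt x : x <> hzero -> 0 < hinner x x.
Proof.
  intro Hx. destruct (hinner_pos _ x) as [h|h]; auto. exfalso; apply Hx, hinner_def; auto.
Qed.

Lemma hnorm_ge0 x : 0 <= hnorm x.
Proof. apply sqrt_pos. Qed.

Lemma hnorm_sq x : hnorm x * hnorm x = hinner x x.
Proof. unfold hnorm; apply sqrt_sqrt, hinner_pos. Qed.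

Lemma hnorm_zero : hnorm (@hzero H) = 0.
Proof. unfold hnorm; rewrite hinner_zero_l; apply sqrt_0. Qed.

Lemma hnorm_eq0 x : hnorm x = 0 -> x = hzero.
Proof. intro E. apply hinner_def. rewrite <- hnorm_sq, E; ring. Qed.

Lemma hnorm_pos x : x <> hzero -> 0 < hnorm x.
Proof. intro Hx. apply sqrt_lt_R0, hinner_pos_lt, Hx. Qed.

Lemma hnorm_le_hinner x y : hinner x x <= hinner y y -> hnorm x <= hnorm y.
Proof. intro E. apply sqrt_le_1_alt; auto. Qed.

Lemma hnorm_le_sqr x b : 0 <= b -> hinner x x <= b * b -> hnorm x <= b.
Proof. intros Hb E. apply le_of_sqr_le; auto. rewrite hnorm_sq; auto. Qed.

Lemma cauchy_schwarz x y : hinner x y * hinner x y <= hinner x x * hinner y y.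
Proof.
  apply discriminant_le; [apply hinner_pos|]. intro t.
  assert (E := hinner_pos _ (hadd x (hscal t y))).
  rewrite hinner_add, !hinner_add_r, !hinner_scal, !hinner_scal_r, (hinner_sym _ y x) in E.
  nra.
Qed.

Lemma Rabs_hinner_le x y : Rabs (hinner x y) <= hnorm x * hnorm y.
Proof.
  apply le_of_sqr_le; [apply Rmult_le_pos; apply hnorm_ge0|].
  replace (hnorm x * hnorm y * (hnorm x * hnorm y))
    with ((hnorm x * hnorm x) * (hnorm y * hnorm y)) by ring.
  rewrite <- Rabs_mult, !hnorm_sq, Rabs_right by (apply Rle_ge, Rle_0_sqr).
  apply cauchy_schwarz.
Qed.

Lemma hinner_le_norm x y : hinner x y <= hnorm x * hnorm y.
Proof. eapply Rle_trans; [apply Rle_abs|apply Rabs_hinner_le]. Qed.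

Lemma hnorm_triangle x y : hnorm (hadd x y) <= hnorm x + hnorm y.
Proof.
  apply hnorm_le_sqr; [generalize (hnorm_ge0 x) (hnorm_ge0 y); lra|].
  rewrite hinner_add, !hinner_add_r, (hinner_sym _ y x), <- !hnorm_sq.
  generalize (hinner_le_norm x y); nra.
Qed.

Lemma hnorm_scal a x : hnorm (hscal a x) = Rabs a * hnorm x.
Proof.
  unfold hnorm. rewrite hinner_scal, hinner_scal_r, <- Rmult_assoc, sqrt_mult_alt.
  - f_equal. apply sqrt_Rsqr_abs.
  - apply Rle_0_sqr.
Qed.

Lemma hinner_normalize x :
  x <> hzero -> hinner (hscal (/ hnorm x) x) (hscal (/ hnorm x) x) = 1.
Proof.
  intro Hx. assert (P := hnorm_pos x Hx).
  rewrite hinner_scal, hinner_scal_r, <- hnorm_sq. field. lra.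
Qed.

Lemma hopp_scal x : hopp x = hscal (-1) x.
Proof. apply hvec_ext; intro w. rewrite hinner_opp_l, hinner_scal; ring. Qed.

End InnerProduct.

Ltac hvec_ring :=
  apply hvec_ext; intro;
  repeat (rewrite hinner_add || rewrite hinner_sub_l || rewrite hinner_scal
          || rewrite hinner_opp_l || rewrite hinner_zero_l);
  ring.

Section Norms.
Context {H : HilbertSpace}.
Implicit Types x y z : H.

Lemma hnorm_sub_comm x y : hnorm (hsub x y) = hnorm (hsub y x).
Proof.
  unfold hnorm. f_equal.
  rewrite !hinner_sub_l, !hinner_sub_r, (hinner_sym _ x y). ring.
Qed.

Lemma hnorm_sub_triangle x y z : hnorm (hsub x z) <= hnorm (hsub x y) + hnorm (hsub y z).
Proof.
  replace (hsub x z) with (hadd (hsub x y) (hsub y z)) by hvec_ring.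
  apply hnorm_triangle.
Qed.

Lemma hnorm_scal_m1 x : hnorm (hscal (-1) x) = hnorm x.
Proof. rewrite hnorm_scal, Rabs_left by lra; ring. Qed.

End Norms.

Lemma Rsup_lub E : bound E -> (exists x, E x) -> is_lub E (Rsup E).
Proof.
  intros Hb Hn. unfold Rsup. destruct excluded_middle_informative as [h|h].
  - destruct (completeness E (proj1 h) (proj2 h)) as [s Hs]; simpl; auto.
  - exfalso; tauto.
Qed.

Lemma Rsup_empty E : ~ (exists x, E x) -> Rsup E = 0.
Proof.
  intros Hn. unfold Rsup. destruct excluded_middle_informative as [h|h]; auto.
  exfalso; tauto.
Qed.

Lemma Rsup_max E a : E a -> (forall y, E y -> y <= a) -> Rsup E = a.
Proof.
  intros Ea Hb. destruct (Rsup_lub E) as [L1 L2]; [exists a; auto|eauto|].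
  apply Rle_antisym; [apply L2; intros y Ey; auto|apply L1; auto].
Qed.

Lemma Rsup_eq_approx E a : (forall y, E y -> y <= a) ->
  (forall eps, 0 < eps -> exists y, E y /\ a - eps < y) -> Rsup E = a.
Proof.
  intros Hb Ha. destruct (Ha 1 Rlt_0_1) as [y0 [Ey0 _]].
  destruct (Rsup_lub E) as [L1 L2]; [exists a; auto|eauto|].
  apply Rle_antisym; [apply L2; intros y Ey; auto|].
  destruct (Rle_or_lt a (Rsup E)) as [h|h]; auto.
  destruct (Ha (a - Rsup E)) as [y [Ey Hy]]; [lra|]. specialize (L1 _ Ey). lra.
Qed.

Lemma Rinf_is_glb (E : R -> Prop) m x : E x -> (forall y, E y -> m <= y) ->
  (forall y, E y -> Rinf E <= y) /\ (forall m', (forall y, E y -> m' <= y) -> m' <= Rinf E).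
Proof.
  intros Ex Hm. unfold Rinf.
  destruct (Rsup_lub (fun t => E (- t))) as [L1 L2].
  - exists (- m). intros t Et. specialize (Hm _ Et). lra.
  - exists (- x). rewrite Ropp_involutive; auto.
  - split.
    + intros y Ey. assert (- y <= Rsup (fun t => E (- t))); [|lra].
      apply L1. rewrite Ropp_involutive; auto.
    + intros m' Hm'. assert (Rsup (fun t => E (- t)) <= - m'); [|lra].
      apply L2. intros t Et. specialize (Hm' _ Et). lra.
Qed.

Lemma Rinf_le (E : R -> Prop) m x : (forall y, E y -> m <= y) -> E x -> Rinf E <= x.
Proof. intros Hm Ex. apply (Rinf_is_glb E m x); auto. Qed.

Lemma Rinf_ge (E : R -> Prop) m x : E x -> (forall y, E y -> m <= y) -> m <= Rinf E.
Proof. intros Ex Hm. apply (Rinf_is_glb E m x); auto. Qed.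

Lemma Rinf_approx (E : R -> Prop) m x eps : (forall y, E y -> m <= y) -> E x ->
  0 < eps -> exists y, E y /\ y < Rinf E + eps.
Proof.
  intros Hm Ex He. apply NNPP; intro h.
  assert (Rinf E + eps <= Rinf E); [|lra].
  apply (Rinf_ge E _ x Ex). intros y Ey. apply Rnot_lt_le; intro Hy. eauto.
Qed.

Lemma pow_small q K : 0 <= q < 1 -> 0 <= K ->
  forall e, 0 < e -> exists N, forall n, (N <= n)%nat -> K * q ^ n < e.
Proof.
  intros Hq HK e He.
  destruct (pow_lt_1_zero q ltac:(rewrite Rabs_right; lra) (e / (K + 1))) as [N HN].
  { apply Rdiv_lt_0_compat; lra. }
  exists N. intros n Hn. specialize (HN n Hn).
  rewrite Rabs_right in HN by (apply Rle_ge, pow_le; lra).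
  apply Rmult_lt_compat_l with (r := K + 1) in HN; [|lra].
  replace ((K + 1) * (e / (K + 1))) with e in HN by (field; lra).
  assert (0 <= q ^ n) by (apply pow_le; lra). nra.
Qed.

Section Limits.
Context {H : HilbertSpace}.

Lemma seq_lim_unique (u : nat -> H) l1 l2 : seq_lim u l1 -> seq_lim u l2 -> l1 = l2.
Proof.
  intros L1 L2. apply hsub_eq0, hnorm_eq0.
  apply Rle_antisym; [|apply hnorm_ge0]. apply Rnot_lt_le; intro Hp.
  destruct (L1 (hnorm (hsub l1 l2) / 2)) as [N1 H1]; [lra|].
  destruct (L2 (hnorm (hsub l1 l2) / 2)) as [N2 H2]; [lra|].
  specialize (H1 (N1 + N2)%nat ltac:(lia)). specialize (H2 (N1 + N2)%nat ltac:(lia)).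
  assert (Tr := hnorm_sub_triangle l1 (u (N1 + N2)%nat) l2).
  rewrite (hnorm_sub_comm l1 (u (N1 + N2)%nat)) in Tr. lra.
Qed.

Lemma seq_lim_shift (u : nat -> H) l : seq_lim u l -> seq_lim (fun n => u (S n)) l.
Proof. intros L e He. destruct (L e He) as [N HN]. exists N. intros n Hn. apply HN; lia. Qed.

Lemma seq_lim_lipschitz (F : H -> Prop) (f : H -> H) L (u : nat -> H) l :
  0 <= L -> (forall x y, F x -> F y -> hnorm (hsub (f x) (f y)) <= L * hnorm (hsub x y)) ->
  (forall n, F (u n)) -> F l -> seq_lim u l -> seq_lim (fun n => f (u n)) (f l).
Proof.
  intros HL Hf Fu Fl Lu e He.
  destruct (Lu (e / (L + 1))) as [N HN]; [apply Rdiv_lt_0_compat; lra|].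
  exists N. intros n Hn. eapply Rle_lt_trans; [apply Hf; auto|].
  specialize (HN n Hn).
  apply Rmult_lt_compat_l with (r := L + 1) in HN; [|lra].
  replace ((L + 1) * (e / (L + 1))) with e in HN by (field; lra).
  generalize (hnorm_ge0 (hsub (u n) l)); nra.
Qed.

Lemma seq_lim_hinner_zero (u : nat -> H) l k :
  seq_lim u l -> (forall n, hinner (u n) k = 0) -> hinner l k = 0.
Proof.
  intros Lu Hk. apply NNPP; intro h.
  assert (Hp := Rabs_pos_lt _ h).
  destruct (Lu (Rabs (hinner l k) / (hnorm k + 1))) as [N HN].
  { apply Rdiv_lt_0_compat; [lra|generalize (hnorm_ge0 k); lra]. }
  specialize (HN N (le_n _)).
  assert (E : hinner l k = - hinner (hsub (u N) l) k) by (rewrite hinner_sub_l, Hk; ring).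
  assert (C := Rabs_hinner_le (hsub (u N) l) k).
  rewrite E, Rabs_Ropp in Hp, HN.
  apply Rmult_lt_compat_r with (r := hnorm k + 1) in HN; [|generalize (hnorm_ge0 k); lra].
  replace (Rabs (hinner (hsub (u N) l) k) / (hnorm k + 1) * (hnorm k + 1))
    with (Rabs (hinner (hsub (u N) l) k)) in HN by (field; generalize (hnorm_ge0 k); lra).
  generalize (hnorm_ge0 k) (hnorm_ge0 (hsub (u N) l)). nra.
Qed.

Lemma hnorm_sub_geometric (u : nat -> H) C q : 0 <= q < 1 ->
  (forall n, hnorm (hsub (u (S n)) (u n)) <= C * q ^ n) ->
  forall n k, hnorm (hsub (u (n + k)%nat) (u n)) <= C * q ^ n / (1 - q).
Proof.
  intros Hq Hu n k.
  assert (C0 : 0 <= C).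
  { specialize (Hu 0%nat). simpl in Hu. generalize (hnorm_ge0 (hsub (u 1%nat) (u 0%nat))). lra. }
  apply Rle_trans with (C * q ^ n * (1 - q ^ k) / (1 - q)).
  - induction k as [|k IH].
    + rewrite Nat.add_0_r. unfold hsub. rewrite hadd_opp, hnorm_zero.
      simpl. right. field. lra.
    + eapply Rle_trans; [apply (hnorm_sub_triangle _ (u (n + k)%nat))|].
      replace (n + S k)%nat with (S (n + k)) by lia.
      eapply Rle_trans; [apply Rplus_le_compat; [apply Hu|apply IH]|].
      rewrite pow_add. right. simpl. field. lra.
  - unfold Rdiv. apply Rmult_le_compat_r; [apply Rlt_le, Rinv_0_lt_compat; lra|].
    assert (0 <= q ^ n) by (apply pow_le; lra). assert (0 <= q ^ k) by (apply pow_le; lra).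
    assert (0 <= C * q ^ n * q ^ k) by (repeat apply Rmult_le_pos; auto). lra.
Qed.

Lemma seq_lim_geometric (u : nat -> H) C q : 0 <= q < 1 ->
  (forall n, hnorm (hsub (u (S n)) (u n)) <= C * q ^ n) ->
  exists l, seq_lim u l /\ forall n, hnorm (hsub l (u n)) <= C * q ^ n / (1 - q).
Proof.
  intros Hq Hu. assert (Bd := hnorm_sub_geometric u C q Hq Hu).
  assert (C0 : 0 <= C / (1 - q)).
  { specialize (Bd 0%nat 1%nat). simpl in Bd.
    generalize (hnorm_ge0 (hsub (u 1%nat) (u 0%nat))). lra. }
  destruct (hcomplete H u) as [l Hl].
  - intros e He. destruct (pow_small q _ Hq C0 (e / 2)) as [N HN]; [lra|].
    exists N. intros m n Hm Hn.
    fold (hsub (u m) (u n)). fold (hnorm (hsub (u m) (u n))).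
    assert (A1 := Bd N (m - N)%nat). assert (A2 := Bd N (n - N)%nat).
    replace (N + (m - N))%nat with m in A1 by lia. replace (N + (n - N))%nat with n in A2 by lia.
    assert (Tr := hnorm_sub_triangle (u m) (u N) (u n)).
    rewrite (hnorm_sub_comm (u N)) in Tr. specialize (HN N (le_n _)).
    unfold Rdiv in *. lra.
  - exists l. split; [exact Hl|]. intros n. apply Rnot_lt_le; intro Hlt.
    destruct (Hl (hnorm (hsub l (u n)) - C * q ^ n / (1 - q))) as [N HN]; [lra|].
    specialize (HN (n + N)%nat ltac:(lia)). specialize (Bd n N).
    assert (Tr := hnorm_sub_triangle l (u (n + N)%nat) (u n)).
    fold (hsub (u (n + N)%nat) l) in HN. fold (hnorm (hsub (u (n + N)%nat) l)) in HN.
    rewrite (hnorm_sub_comm l (u (n + N)%nat)) in Tr. lra.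
Qed.

End Limits.

Section Subspaces.
Context {H : HilbertSpace}.
Implicit Types x y z u v w : H.
Variable F : H -> Prop.
Hypothesis hF : closed_subspace F.

Lemma closed_subspace_zero : F hzero.
Proof. apply hF. Qed.

Lemma closed_subspace_add x y : F x -> F y -> F (hadd x y).
Proof. apply hF. Qed.

Lemma closed_subspace_scal a x : F x -> F (hscal a x).
Proof. apply hF. Qed.

Lemma closed_subspace_sub x y : F x -> F y -> F (hsub x y).
Proof.
  intros Fx Fy. unfold hsub. rewrite hopp_scal.
  apply closed_subspace_add, closed_subspace_scal; auto.
Qed.

Lemma closed_subspace_comb x y t : F x -> F y -> F (hadd x (hscal t y)).
Proof. intros; apply closed_subspace_add, closed_subspace_scal; auto. Qed.

Lemma closed_subspace_lim (u : nat -> H) l : (forall n, F (u n)) -> seq_lim u l -> F l.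
Proof. apply hF. Qed.

Lemma contraction_fixed_point (K : H -> H) q w : 0 <= q < 1 ->
  (forall x, F x -> F (K x)) -> (forall x y, K (hsub x y) = hsub (K x) (K y)) ->
  (forall x, F x -> hnorm (K x) <= q * hnorm x) -> F w ->
  exists s, F s /\ s = hadd w (K s).
Proof.
  intros Hq FK Kl Kb Fw.
  set (f := fun x => hadd w (K x)).
  assert (f_sub : forall x y, hsub (f x) (f y) = K (hsub x y)) by (intros; rewrite Kl; unfold f; hvec_ring).
  set (u := fun n => Nat.iter n f hzero).
  assert (Fu : forall n, F (u n)).
  { induction n as [|n IH]; [exact closed_subspace_zero|].
    apply closed_subspace_add; [exact Fw|apply FK, IH]. }
  assert (Step : forall n, hnorm (hsub (u (S n)) (u n)) <= hnorm w * q ^ n).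
  { induction n as [|n IH].
    - simpl. assert (K0 : K hzero = hzero) 
        by (generalize (Kl hzero hzero); unfold hsub; rewrite !hadd_opp; auto).
      unfold f. rewrite K0. replace (hsub (hadd w hzero) hzero) with w by hvec_ring. lra.
    - change (hnorm (hsub (f (u (S n))) (f (u n))) <= hnorm w * (q * q ^ n)).
      rewrite f_sub. eapply Rle_trans; [apply Kb, closed_subspace_sub; auto|].
      rewrite <- Rmult_assoc, (Rmult_comm (hnorm w) q), Rmult_assoc.
      apply Rmult_le_compat_l; [lra|exact IH]. }
  destruct (seq_lim_geometric u _ _ Hq Step) as [s [Ls _]].
  assert (Fs : F s) by (eapply closed_subspace_lim; eauto).
  exists s. split; auto.
  apply (seq_lim_unique (fun n => u (S n))); [apply seq_lim_shift; auto|].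
  apply (seq_lim_lipschitz F f q); auto; [lra|].
  intros x y Fx Fy. rewrite f_sub. apply Kb, closed_subspace_sub; auto.
Qed.

End Subspaces.

Lemma orth_compl_closed {H : HilbertSpace} (F : H -> Prop) : closed_subspace (orth_compl F).
Proof.
  split; [|split; [|split]].
  - intros x _. apply hinner_zero_l.
  - intros x y Hx Hy k Fk. rewrite hinner_add, Hx, Hy; auto; ring.
  - intros a x Hx k Fk. rewrite hinner_scal, Hx; auto; ring.
  - intros u l Hu Lu k Fk. apply (seq_lim_hinner_zero u); auto. intro n; apply Hu; auto.
Qed.

Lemma cap_closed {H : HilbertSpace} (F G : H -> Prop) :
  closed_subspace F -> closed_subspace G -> closed_subspace (cap F G).
Proof.
  intros CF CG. split; [|split; [|split]].
  - split; apply closed_subspace_zero; auto.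
  - intros x y [] []; split; apply closed_subspace_add; auto.
  - intros a x []; split; apply closed_subspace_scal; auto.
  - intros u l Hu Lu. split; eapply closed_subspace_lim; eauto; intro n; apply Hu.
Qed.

Section Projection.
Context {H : HilbertSpace}.
Implicit Types x y z : H.
Variables (F : H -> Prop) (P : H -> H).
Hypotheses (hF : closed_subspace F) (hP : is_orth_proj F P).

Lemma proj_in x : F (P x).
Proof. apply hP. Qed.

Lemma proj_orth x y : F y -> hinner (hsub x (P x)) y = 0.
Proof. apply hP. Qed.

Lemma proj_unique x p : F p -> (forall y, F y -> hinner (hsub x p) y = 0) -> P x = p.
Proof.
  intros Fp Hp. apply hsub_eq0, hinner_def.
  assert (Fd : F (hsub (P x) p)) by (apply closed_subspace_sub; auto; apply proj_in).
  assert (E1 := proj_orth x _ Fd). assert (E2 := Hp _ Fd).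
  rewrite !hinner_sub_l in E1, E2 |- *. lra.
Qed.

Lemma proj_fix x : F x -> P x = x.
Proof.
  intro Fx. apply proj_unique; auto. intros y Fy.
  unfold hsub. rewrite hadd_opp. apply hinner_zero_l.
Qed.

Lemma proj_add x y : P (hadd x y) = hadd (P x) (P y).
Proof.
  apply proj_unique; [apply closed_subspace_add; auto; apply proj_in|].
  intros z Fz. assert (E1 := proj_orth x _ Fz). assert (E2 := proj_orth y _ Fz).
  rewrite !hinner_sub_l, !hinner_add in *. lra.
Qed.

Lemma proj_scal a x : P (hscal a x) = hscal a (P x).
Proof.
  apply proj_unique; [apply closed_subspace_scal; auto; apply proj_in|].
  intros z Fz. assert (E1 := proj_orth x _ Fz).
  rewrite !hinner_sub_l, !hinner_scal in *. nra.
Qed.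

Lemma proj_sub x y : P (hsub x y) = hsub (P x) (P y).
Proof. unfold hsub. rewrite hopp_scal, proj_add, proj_scal, <- hopp_scal; auto. Qed.

Lemma proj_zero : P hzero = hzero.
Proof. apply proj_fix, closed_subspace_zero; auto. Qed.

Lemma proj_idem x : P (P x) = P x.
Proof. apply proj_fix, proj_in. Qed.

Lemma hinner_proj_l x y : hinner (P x) y = hinner (P x) (P y).
Proof.
  assert (E := proj_orth y _ (proj_in x)). rewrite hinner_sub_l in E.
  rewrite (hinner_sym _ (P x) y), (hinner_sym _ (P x) (P y)). lra.
Qed.

Lemma proj_sym x y : hinner (P x) y = hinner x (P y).
Proof. rewrite hinner_proj_l, (hinner_sym _ x), (hinner_proj_l y x), hinner_sym; auto. Qed.

Lemma proj_hinner_le x : hinner (P x) (P x) <= hinner x x.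
Proof.
  assert (E := proj_orth x _ (proj_in x)).
  assert (Q := hinner_pos _ (hsub x (P x))).
  rewrite !hinner_sub_l, !hinner_sub_r, (hinner_sym _ x (P x)) in *. lra.
Qed.

Lemma proj_norm_le x : hnorm (P x) <= hnorm x.
Proof. apply hnorm_le_hinner, proj_hinner_le. Qed.

Lemma orth_compl_iff_proj0 y : orth_compl F y <-> P y = hzero.
Proof.
  split.
  - intro Hy. apply proj_unique; [apply closed_subspace_zero; auto|].
    intros z Fz. rewrite hinner_sub_l, hinner_zero_l, Hy; auto; ring.
  - intros E x Fx. rewrite <- (proj_fix x Fx), <- proj_sym, E, hinner_zero_l; auto.
Qed.

Lemma proj_compl_in x : orth_compl F (hsub x (P x)).
Proof. intros y Fy. apply proj_orth; auto. Qed.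

Lemma hinner_proj_compl x : hinner (hsub x (P x)) (hsub x (P x)) = hinner x x - hinner (P x) (P x).
Proof.
  rewrite !hinner_sub_l, !hinner_sub_r, (hinner_sym _ x (P x)), (hinner_proj_l x x). ring.
Qed.

End Projection.

(* Cauchy-Schwarz for the semi-inner product [(x, y) |-> <Q x, y>]. *)
Lemma sym_pos_op_sq_le {H : HilbertSpace} (F : H -> Prop) (Q : H -> H) (beta : R) :
  0 <= beta -> closed_subspace F ->
  (forall x y t, Q (hadd x (hscal t y)) = hadd (Q x) (hscal t (Q y))) ->
  (forall x, F x -> F (Q x)) ->
  (forall x y, F x -> F y -> hinner (Q x) y = hinner x (Q y)) ->
  (forall x, F x -> 0 <= hinner (Q x) x) ->
  (forall x, F x -> hinner (Q x) x <= beta * hinner x x) ->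
  forall x, F x -> hinner (Q x) (Q x) <= beta * hinner (Q x) x.
Proof.
  intros Hb hF Ql FQ Qs Qpos Qbd x Fx.
  set (y := Q x). assert (Fy : F y) by (apply FQ; auto).
  assert (CS : hinner y y * hinner y y <= hinner y x * hinner (Q y) y).
  { apply discriminant_le; [apply Qpos; auto|]. intro t.
    assert (E := Qpos _ (closed_subspace_comb F hF x y t Fx Fy)). rewrite Ql in E.
    rewrite hinner_add, !hinner_add_r, !hinner_scal, !hinner_scal_r, (Qs y x) in E by auto.
    fold y in E. nra. }
  assert (B := Qbd y Fy). assert (P0 := Qpos x Fx). fold y in P0.
  destruct (hinner_pos _ y) as [N0|N0].
  - assert (hinner y y * hinner y y <= hinner y x * (beta * hinner y y)).
    { eapply Rle_trans; [exact CS|]. apply Rmult_le_compat_l; auto. }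
    nra.
  - rewrite <- N0. nra.
Qed.

Lemma acos_le_contravar a b : -1 <= a <= b -> acos b <= acos a.
Proof.
  intros [Ha Hab]. destruct (Rle_or_lt 1 b) as [Hb|Hb].
  - replace (acos b) with 0; [apply acos_bound|].
    unfold acos. destruct (Rle_dec b (-1)); [lra|]. destruct (Rle_dec 1 b); [auto|lra].
  - apply cos_decr_0; try apply acos_bound. rewrite !cos_acos; lra.
Qed.

Lemma acos_pos_neq_PI2 s : 0 < s <= 1 -> acos s <> PI / 2.
Proof. intros Hs E. assert (h := cos_acos s ltac:(lra)). rewrite E, cos_PI2 in h. lra. Qed.

Lemma acos_gt_of_lt_sin s e : 0 < e <= 1 -> 0 <= s < sin e -> PI / 2 - e < acos s.
Proof.
  intros He Hs. assert (PIb := PI2_1). assert (S1 := SIN_bound e).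
  apply cos_decreasing_0; try lra; try apply acos_bound.
  rewrite cos_shift, cos_acos; lra.
Qed.

Section Distance.
Context {H : HilbertSpace}.
Implicit Types g x : H.

Lemma dist_le g (F : H -> Prop) a : F a -> Defs.dist g F <= hnorm (hsub g a).
Proof. intro Fa. apply (Rinf_le _ 0); eauto. intros y [b [_ ->]]. apply hnorm_ge0. Qed.

Lemma dist_ge g (F : H -> Prop) m :
  F hzero -> (forall a, F a -> m <= hnorm (hsub g a)) -> m <= Defs.dist g F.
Proof. intros F0 Hm. apply (Rinf_ge _ _ (hnorm (hsub g hzero))); eauto. intros y [b [Fb ->]]; auto. Qed.

End Distance.

Lemma in_spectrum_of_approx {H : HilbertSpace} (F : H -> Prop) (Op : H -> H) lam :
  closed_subspace F -> (forall x, F x -> F (Op x)) ->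
  (forall eta, 0 < eta -> exists u, F u /\ 0 < hinner u u /\
     hinner (hsub (Op u) (hscal lam u)) (hsub (Op u) (hscal lam u)) < eta * hinner u u) ->
  in_spectrum_restr Op F lam.
Proof.
  intros CF FO Hap [B [FB [[C HC] [HBl _]]]].
  (* with [e = (Op - lam) u] we get [|u| = |B e| <= C |e|], against [|e|^2 < |u|^2 / (C^2 + 1)] *)
  destruct (Hap (/ (C * C + 1))) as [u [Fu [Pu Eu]]]; [apply Rinv_0_lt_compat; nra|].
  set (e := hsub (Op u) (hscal lam u)) in *.
  assert (Fe : F e) by (apply closed_subspace_sub, closed_subspace_scal; auto).
  assert (Be := HC e Fe). unfold e in Be. rewrite (HBl u Fu) in Be. fold e in Be.
  assert (Nu : 0 < hnorm u) by (apply sqrt_lt_R0; auto).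
  assert (Ne := hnorm_ge0 e).
  assert (Cp : 0 < C) by (apply Rnot_le_lt; intro; nra).
  assert (Sq : hinner u u <= C * C * hinner e e) by (rewrite <- !hnorm_sq; nra).
  assert (C * C * hinner e e < C * C / (C * C + 1) * hinner u u).
  { replace (C * C / (C * C + 1) * hinner u u) with (C * C * (/ (C * C + 1) * hinner u u))
      by (field; nra).
    apply Rmult_lt_compat_l; nra. }
  assert (C * C / (C * C + 1) < 1).
  { apply Rmult_lt_reg_r with (C * C + 1); [nra|]. unfold Rdiv. rewrite Rmult_assoc, Rinv_l; nra. }
  nra.
Qed.

Section TwoSubspaces.
Context {H : HilbertSpace}.
Implicit Types g k u v w x y z : H.
Variables (Ss Ts : H -> Prop) (S T : H -> H).
Hypotheses (hSs : closed_subspace Ss) (hTs : closed_subspace Ts)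
  (hS : is_orth_proj Ss S) (hT : is_orth_proj Ts T).

Definition ST u := S (T u).

(* [Ker] is the kernel of [ST] on [Ss], and [Mspace] its orthogonal complement in [Ss]. *)
Definition Ker : H -> Prop := cap Ss (orth_compl Ts).
Definition Mspace : H -> Prop := cap Ss (orth_compl Ker).

Definition S_sub_Tperp : Prop := forall g, Ss g -> orth_compl Ts g.

Local Notation gam := (gamma Ss (orth_compl Ts)).

Lemma Ker_closed : closed_subspace Ker.
Proof. apply cap_closed; auto. apply orth_compl_closed. Qed.

Lemma Mspace_closed : closed_subspace Mspace.
Proof. apply cap_closed; auto. apply orth_compl_closed. Qed.

Lemma Tperp_iff y : orth_compl Ts y <-> T y = hzero.
Proof. apply orth_compl_iff_proj0; auto. Qed.

Lemma Ker_T k : Ker k -> T k = hzero.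
Proof. intros [_ h]. apply Tperp_iff; auto. Qed.

Lemma hinner_T_le x : hinner (T x) (T x) <= hinner x x.
Proof. apply (proj_hinner_le Ts T hT). Qed.

Lemma ST_add x y : ST (hadd x y) = hadd (ST x) (ST y).
Proof. unfold ST. rewrite (proj_add Ts T), (proj_add Ss S); auto. Qed.

Lemma ST_scal a x : ST (hscal a x) = hscal a (ST x).
Proof. unfold ST. rewrite (proj_scal Ts T), (proj_scal Ss S); auto. Qed.

Lemma ST_sub x y : ST (hsub x y) = hsub (ST x) (ST y).
Proof. unfold ST. rewrite (proj_sub Ts T), (proj_sub Ss S); auto. Qed.

Lemma ST_in x : Ss (ST x).
Proof. exact (proj_in Ss S hS (T x)). Qed.

Lemma hinner_ST u : Ss u -> hinner (ST u) u = hinner (T u) (T u).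
Proof.
  intro Hu. unfold ST.
  rewrite (proj_sym Ss S hS), (proj_fix Ss S hSs hS u Hu), (hinner_proj_l Ts T hT); auto.
Qed.

Lemma ST_sym u v : Ss u -> Ss v -> hinner (ST u) v = hinner u (ST v).
Proof.
  intros Hu Hv. unfold ST.
  rewrite (proj_sym Ss S hS), (proj_fix Ss S hSs hS v Hv), (proj_sym Ts T hT).
  rewrite <- (proj_fix Ss S hSs hS u Hu) at 1. apply (proj_sym Ss S hS).
Qed.

Lemma ST_sq_le u : Ss u -> hinner (ST u) (ST u) <= hinner (ST u) u.
Proof. intro Hu. rewrite hinner_ST; auto. apply (proj_hinner_le Ss S hS). Qed.

Lemma ST_norm_le x : hnorm (ST x) <= hnorm x.
Proof.
  eapply Rle_trans; [apply (proj_norm_le Ss S hS)|apply (proj_norm_le Ts T hT)].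
Qed.

Lemma ST_Ker k : Ker k -> ST k = hzero.
Proof. intro Hk. unfold ST. rewrite Ker_T, (proj_zero Ss S hSs hS); auto. Qed.

Lemma ST_in_Mspace v : Mspace (ST v).
Proof.
  split; [apply ST_in|]. intros k Hk. unfold ST.
  rewrite (proj_sym Ss S hS), (proj_fix Ss S hSs hS k (proj1 Hk)), (proj_sym Ts T hT), Ker_T;
    auto using hinner_zero_r.
Qed.

Lemma dist_Tperp g : Defs.dist g (orth_compl Ts) = hnorm (T g).
Proof.
  apply Rle_antisym.
  - replace (T g) with (hsub g (hsub g (T g))) by hvec_ring.
    apply dist_le, (proj_compl_in Ts T hT).
  - apply dist_ge; [apply (closed_subspace_zero _ (orth_compl_closed Ts))|].
    intros a Ha. apply hnorm_le_sqr; [apply hnorm_ge0|]. rewrite hnorm_sq.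
    replace (T g) with (T (hsub g a))
      by (rewrite (proj_sub Ts T hTs hT), (proj1 (Tperp_iff a) Ha); hvec_ring).
    apply hinner_T_le.
Qed.

Lemma dist_Ker_ge_T g : hnorm (T g) <= Defs.dist g Ker.
Proof.
  rewrite <- dist_Tperp. apply dist_ge; [apply (closed_subspace_zero _ Ker_closed)|].
  intros a [_ Ha]. apply dist_le; auto.
Qed.

Lemma dist_Ker_Mspace w : Mspace w -> Defs.dist w Ker = hnorm w.
Proof.
  intros [_ Ow]. apply Rle_antisym.
  - replace (hnorm w) with (hnorm (hsub w hzero)) by (f_equal; hvec_ring).
    apply dist_le, (closed_subspace_zero _ Ker_closed).
  - apply dist_ge; [apply (closed_subspace_zero _ Ker_closed)|]. intros a Ka.
    apply hnorm_le_hinner. rewrite !hinner_sub_l, !hinner_sub_r, (hinner_sym _ a w), (Ow a Ka).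
    generalize (hinner_pos _ a); lra.
Qed.

Lemma dist_Ker_pos g : ~ orth_compl Ts g -> 0 < Defs.dist g Ker.
Proof.
  intro Hg. eapply Rlt_le_trans; [|apply dist_Ker_ge_T].
  apply hnorm_pos. rewrite <- Tperp_iff; auto.
Qed.

Definition gap_ratios (r : R) : Prop := exists g, Ss g /\ ~ orth_compl Ts g /\
  r = Defs.dist g (orth_compl Ts) / Defs.dist g (cap Ss (orth_compl Ts)).

Lemma gap_ratio_bounds r : gap_ratios r -> 0 <= r <= 1.
Proof.
  intros [g [_ [Ng ->]]]. rewrite dist_Tperp. fold Ker.
  assert (P := dist_Ker_pos g Ng). assert (Q := dist_Ker_ge_T g).
  split; [apply Rmult_le_pos; [apply hnorm_ge0|apply Rlt_le, Rinv_0_lt_compat; lra]|].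
  apply Rmult_le_reg_r with (Defs.dist g Ker); auto.
  unfold Rdiv. rewrite Rmult_assoc, Rinv_l; lra.
Qed.

Lemma gap_ratio_ge0 r : gap_ratios r -> 0 <= r.
Proof. intro h. apply (gap_ratio_bounds r h). Qed.

Lemma gap_ratios_inhabited : ~ S_sub_Tperp -> exists r, gap_ratios r.
Proof.
  intro Hn. destruct (not_all_ex_not _ _ Hn) as [g Hg]. apply imply_to_and in Hg.
  eexists. exists g. split; [apply Hg|]. split; [apply Hg|reflexivity].
Qed.

Lemma gamma_S_sub : S_sub_Tperp -> gam = 1.
Proof. intro Hs. unfold gamma. destruct excluded_middle_informative; tauto. Qed.

Lemma gamma_Rinf : ~ S_sub_Tperp -> gam = Rinf gap_ratios.
Proof. intro Hn. unfold gamma. destruct excluded_middle_informative; tauto. Qed.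

Lemma gamma_bounds : 0 <= gam <= 1.
Proof.
  destruct (classic S_sub_Tperp) as [Hs|Hn]; [rewrite gamma_S_sub; auto; lra|].
  rewrite gamma_Rinf by auto. destruct (gap_ratios_inhabited Hn) as [r Hr].
  split.
  - apply (Rinf_ge _ _ _ Hr), gap_ratio_ge0.
  - eapply Rle_trans; [apply (Rinf_le _ 0 _ gap_ratio_ge0 Hr)|]. apply gap_ratio_bounds, Hr.
Qed.

Lemma gamma_dist_le g : Ss g -> ~ orth_compl Ts g -> gam * Defs.dist g Ker <= hnorm (T g).
Proof.
  intros Sg Ng.
  assert (Eg : gap_ratios (hnorm (T g) / Defs.dist g Ker)).
  { exists g. rewrite dist_Tperp. tauto. }
  rewrite gamma_Rinf by (intro Hs; apply Ng, Hs, Sg).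
  assert (L := Rinf_le _ 0 _ gap_ratio_ge0 Eg).
  assert (P := dist_Ker_pos g Ng).
  apply Rmult_le_compat_r with (r := Defs.dist g Ker) in L; [|lra].
  unfold Rdiv in L. rewrite Rmult_assoc, Rinv_l, Rmult_1_r in L; lra.
Qed.

Lemma gamma_Mspace w : Mspace w -> gam * hnorm w <= hnorm (T w).
Proof.
  intros Mw. destruct (classic (orth_compl Ts w)) as [h|h].
  - replace w with (@hzero H) by (symmetry; apply hinner_def, (proj2 Mw); split; [apply Mw|auto]).
    rewrite hnorm_zero, Rmult_0_r. apply hnorm_ge0.
  - rewrite <- (dist_Ker_Mspace w Mw). apply gamma_dist_le; auto. apply Mw.
Qed.

Lemma gamma_sq_Mspace w : Mspace w -> gam * gam * hinner w w <= hinner (T w) (T w).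
Proof.
  intros Mw. rewrite <- !hnorm_sq.
  assert (G := gamma_Mspace w Mw). assert (G0 := proj1 gamma_bounds).
  assert (0 <= gam * hnorm w) by (apply Rmult_le_pos; auto; apply hnorm_ge0).
  assert (gam * hnorm w * (gam * hnorm w) <= hnorm (T w) * hnorm (T w))
    by (apply Rmult_le_compat; auto).
  nra.
Qed.

Lemma gamma_approx eps : ~ S_sub_Tperp -> 0 < eps -> exists g, Ss g /\ ~ orth_compl Ts g /\
  hnorm (T g) < (gam + eps) * Defs.dist g Ker.
Proof.
  intros Hn He. rewrite gamma_Rinf by auto. destruct (gap_ratios_inhabited Hn) as [r Hr].
  destruct (Rinf_approx _ _ _ eps gap_ratio_ge0 Hr He) as [y [[g [Sg [Ng ->]]] Hy]].
  exists g. split; auto. split; auto. rewrite dist_Tperp in Hy. fold Ker in Hy.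
  assert (P := dist_Ker_pos g Ng).
  apply Rmult_lt_compat_r with (r := Defs.dist g Ker) in Hy; auto.
  unfold Rdiv in Hy. rewrite Rmult_assoc, Rinv_l, Rmult_1_r in Hy; lra.
Qed.

Definition STpoly (a b d : R) x : H := hadd (hscal a x) (hadd (hscal b (ST x)) (hscal d (ST (ST x)))).

Definition shift (lam : R) u : H := hsub (ST u) (hscal lam u).

Lemma shift_STpoly lam x : shift lam x = STpoly (- lam) 1 0 x.
Proof. unfold shift, STpoly. hvec_ring. Qed.

Lemma shift_shift r1 r2 x : shift r1 (shift r2 x) = STpoly (r1 * r2) (- (r1 + r2)) 1 x.
Proof. unfold shift, STpoly. rewrite ST_sub, ST_scal. hvec_ring. Qed.

Lemma shift_in lam x : Ss x -> Ss (shift lam x).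
Proof.
  intro Sx. unfold shift. apply closed_subspace_sub; auto using ST_in.
  apply closed_subspace_scal; auto.
Qed.

Lemma shift_in_Mspace lam x : Mspace x -> Mspace (shift lam x).
Proof.
  intro Mx. unfold shift. apply closed_subspace_sub; auto using ST_in_Mspace, Mspace_closed.
  apply closed_subspace_scal; auto using Mspace_closed.
Qed.

Lemma STpoly_comb a b d x y t :
  STpoly a b d (hadd x (hscal t y)) = hadd (STpoly a b d x) (hscal t (STpoly a b d y)).
Proof. unfold STpoly. repeat (rewrite ST_add || rewrite ST_scal). hvec_ring. Qed.

Lemma hinner_STpoly a b d x : Ss x ->
  hinner (STpoly a b d x) x = a * hinner x x + b * hinner (T x) (T x) + d * hinner (ST x) (ST x).
Proof.
  intro Sx. unfold STpoly.
  rewrite !hinner_add, !hinner_scal, (ST_sym (ST x) x), hinner_ST by auto using ST_in. ring.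
Qed.

Lemma STpoly_sq_le (F : H -> Prop) a b d beta : 0 <= beta -> closed_subspace F ->
  (forall x, F x -> Ss x) -> (forall x, F x -> F (ST x)) ->
  (forall x, F x -> 0 <= hinner (STpoly a b d x) x) ->
  (forall x, F x -> hinner (STpoly a b d x) x <= beta * hinner x x) ->
  forall x, F x -> hinner (STpoly a b d x) (STpoly a b d x) <= beta * hinner (STpoly a b d x) x.
Proof.
  intros Hb hF FS FST. apply sym_pos_op_sq_le; auto using STpoly_comb.
  - intros x Fx. unfold STpoly.
    apply closed_subspace_add, closed_subspace_add; auto; apply closed_subspace_scal; auto.
  - intros x y Fx Fy. unfold STpoly.
    rewrite !hinner_add, !hinner_add_r, !hinner_scal, !hinner_scal_r.
    rewrite (ST_sym (ST x) y), (ST_sym x (ST y)), (ST_sym x y) by auto using ST_in.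
    ring.
Qed.

Definition ST_ge_on_range (c : R) : Prop :=
  forall u, Ss u -> c * hinner (ST u) (ST u) <= hinner (ST (ST u)) (ST u).

Lemma compl_ST_on_range c u : ST_ge_on_range c -> c <= 1 -> Ss u ->
  hnorm (hsub (ST u) (ST (ST u))) <= sqrt (1 - c) * hnorm (ST u).
Proof.
  intros Hc Hc1 Su.
  apply hnorm_le_sqr; [apply Rmult_le_pos; [apply sqrt_pos|apply hnorm_ge0]|].
  replace (sqrt (1 - c) * hnorm (ST u) * (sqrt (1 - c) * hnorm (ST u)))
    with ((sqrt (1 - c) * sqrt (1 - c)) * (hnorm (ST u) * hnorm (ST u))) by ring.
  rewrite sqrt_sqrt, hnorm_sq by lra.
  assert (L := ST_sq_le (ST u) (ST_in u)). assert (C := Hc u Su).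
  rewrite !hinner_sub_l, !hinner_sub_r, (hinner_sym _ (ST u) (ST (ST u))). lra.
Qed.

(* The iterates of [I - ST] started at [g] converge to the component of [g] in [Ker]. *)
Definition ST_iter g (n : nat) : H := Nat.iter n (fun x => hsub x (ST x)) g.

Lemma ST_iter_in g n : Ss g -> Ss (ST_iter g n).
Proof.
  intro Sg. induction n as [|n IH]; [exact Sg|].
  exact (closed_subspace_sub Ss hSs _ _ IH (ST_in _)).
Qed.

Lemma ST_iter_bound c g n : ST_ge_on_range c -> c <= 1 -> Ss g ->
  hnorm (ST (ST_iter g n)) <= hnorm (ST g) * sqrt (1 - c) ^ n.
Proof.
  intros Hc Hc1 Sg. induction n as [|n IH]; [simpl; lra|].
  change (ST_iter g (Datatypes.S n)) with (hsub (ST_iter g n) (ST (ST_iter g n))).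
  rewrite ST_sub. eapply Rle_trans; [apply (compl_ST_on_range c); auto using ST_iter_in|].
  simpl. generalize (Rmult_le_compat_l _ _ _ (sqrt_pos (1 - c)) IH). lra.
Qed.

Lemma ST_iter_orth_Ker g n k : Ker k -> hinner (hsub g (ST_iter g n)) k = 0.
Proof.
  intro Kk. induction n as [|n IH].
  - simpl. unfold hsub. rewrite hadd_opp. apply hinner_zero_l.
  - change (ST_iter g (Datatypes.S n)) with (hsub (ST_iter g n) (ST (ST_iter g n))).
    rewrite hinner_sub_l in IH. rewrite !hinner_sub_l.
    rewrite (proj2 (ST_in_Mspace _) k Kk). lra.
Qed.

Lemma seq_lim_geometric_zero (v : nat -> H) C q l : 0 <= q < 1 ->
  (forall n, hnorm (v n) <= C * q ^ n) -> seq_lim v l -> l = hzero.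
Proof.
  intros Hq Hv Lv. apply (seq_lim_unique v); auto.
  intros e He.
  assert (C0 : 0 <= C) by (specialize (Hv 0%nat); simpl in Hv; generalize (hnorm_ge0 (v 0%nat)); lra).
  destruct (pow_small q C Hq C0 e He) as [N HN]. exists N. intros n Hn.
  replace (hsub (v n) hzero) with (v n) by hvec_ring.
  eapply Rle_lt_trans; [apply Hv|auto].
Qed.

Lemma Ker_Mspace_decomp c g : 0 < c <= 1 -> ST_ge_on_range c -> Ss g ->
  exists z, Ker z /\ Mspace (hsub g z) /\
    hnorm (hsub g z) <= hnorm (ST g) / (1 - sqrt (1 - c)).
Proof.
  intros Hc Hrange Sg. set (q := sqrt (1 - c)).
  assert (Hq : 0 <= q < 1) by (apply sqrt_one_sub_bounds, Hc).
  assert (Step : forall n, hnorm (hsub (ST_iter g (Datatypes.S n)) (ST_iter g n)) <= hnorm (ST g) * q ^ n).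
  { intro n. change (ST_iter g (Datatypes.S n)) with (hsub (ST_iter g n) (ST (ST_iter g n))).
    replace (hsub (hsub (ST_iter g n) (ST (ST_iter g n))) (ST_iter g n))
      with (hscal (-1) (ST (ST_iter g n))) by hvec_ring.
    rewrite hnorm_scal_m1. apply ST_iter_bound; auto; lra. }
  destruct (seq_lim_geometric _ _ _ Hq Step) as [z [Lz Bz]].
  assert (Sz : Ss z) by (apply (closed_subspace_lim Ss hSs (ST_iter g)); auto using ST_iter_in).
  assert (STz : ST z = hzero).
  { apply (seq_lim_geometric_zero (fun n => ST (ST_iter g n)) (hnorm (ST g)) q); auto.
    - intro n. apply ST_iter_bound; auto; lra.
    - apply (seq_lim_lipschitz Ss ST 1); auto using ST_iter_in; [lra|].
      intros x y _ _. rewrite <- ST_sub, Rmult_1_l. apply ST_norm_le. }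
  assert (Kz : Ker z).
  { split; auto. apply Tperp_iff, hinner_def. rewrite <- hinner_ST, STz by auto. apply hinner_zero_l. }
  exists z. split; [exact Kz|]. split; [split|].
  - apply closed_subspace_sub; auto.
  - intros k Kk. apply (seq_lim_hinner_zero (fun n => hsub g (ST_iter g n))); auto using ST_iter_orth_Ker.
    intros e He. destruct (Lz e He) as [N HN]. exists N. intros n Hn.
    replace (hsub (hsub g (ST_iter g n)) (hsub g z)) with (hscal (-1) (hsub (ST_iter g n) z)) by hvec_ring.
    rewrite hnorm_scal_m1. auto.
  - specialize (Bz 0%nat). simpl in Bz. rewrite Rmult_1_r in Bz.
    rewrite hnorm_sub_comm. exact Bz.
Qed.

Definition nu_ratios (r : R) : Prop := exists x : H,
  (exists y, orth_compl Ts y /\ x = hsub y (S y)) /\ x <> hzero /\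
  r = hnorm (hsub x (T x)) / hnorm x.

Lemma nu_ratio_bounds x : x <> hzero -> 0 <= hnorm (hsub x (T x)) / hnorm x <= 1.
Proof.
  intro Hx. assert (P := hnorm_pos x Hx).
  assert (L : hnorm (hsub x (T x)) <= hnorm x).
  { apply hnorm_le_hinner. rewrite (hinner_proj_compl Ts T hT). generalize (hinner_pos _ (T x)); lra. }
  split.
  - apply Rmult_le_pos; [apply hnorm_ge0|apply Rlt_le, Rinv_0_lt_compat; auto].
  - apply Rmult_le_reg_r with (hnorm x); auto. unfold Rdiv. rewrite Rmult_assoc, Rinv_l; lra.
Qed.

Lemma nu_ratio_ge0 r : nu_ratios r -> 0 <= r.
Proof. intros [x [_ [Hx ->]]]. apply nu_ratio_bounds; auto. Qed.

Lemma nu_le1 : (exists r, nu_ratios r) -> Rinf nu_ratios <= 1.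
Proof.
  intros [r Hr]. eapply Rle_trans; [apply (Rinf_le _ 0); [apply nu_ratio_ge0|exact Hr]|].
  destruct Hr as [x [_ [Hx ->]]]. apply nu_ratio_bounds; auto.
Qed.

Lemma nu_sq_le x : nu_ratios (hnorm (hsub x (T x)) / hnorm x) -> x <> hzero ->
  Rinf nu_ratios * Rinf nu_ratios * hinner x x <= hinner (hsub x (T x)) (hsub x (T x)).
Proof.
  intros Nx Hx. assert (Px := hnorm_pos x Hx).
  assert (N0 := Rinf_ge _ 0 _ Nx nu_ratio_ge0).
  assert (Le : Rinf nu_ratios * hnorm x <= hnorm (hsub x (T x))).
  { assert (L := Rinf_le _ 0 _ nu_ratio_ge0 Nx).
    apply Rmult_le_compat_r with (r := hnorm x) in L; [|lra].
    unfold Rdiv in L. rewrite Rmult_assoc, Rinv_l, Rmult_1_r in L; lra. }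
  replace (Rinf nu_ratios * Rinf nu_ratios * hinner x x)
    with (Rinf nu_ratios * hnorm x * (Rinf nu_ratios * hnorm x)) by (rewrite <- hnorm_sq; ring).
  rewrite <- hnorm_sq. apply Rmult_le_compat; auto; apply Rmult_le_pos; lra.
Qed.

Lemma T_witness y : orth_compl Ts y -> T (hsub y (S y)) = hscal (-1) (T (S y)).
Proof.
  intro Oy. rewrite (proj_sub Ts T hTs hT), (proj1 (Tperp_iff y) Oy). hvec_ring.
Qed.

Lemma witness_cauchy_schwarz x g : hinner g x = 0 -> T x = hscal (-1) (T g) ->
  hinner (T g) (T g) * hinner x x <= hinner g g * hinner (hsub x (T x)) (hsub x (T x)).
Proof.
  intros Ogx Tx.
  assert (E : hinner (hsub g (T g)) (hsub x (T x)) = hinner (T g) (T g)).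
  { rewrite !hinner_sub_l, !hinner_sub_r, (hinner_proj_l Ts T hT g x), Tx, !hinner_scal_r, Ogx.
    rewrite (hinner_sym _ g (T g)), (hinner_proj_l Ts T hT g g). ring. }
  assert (C := cauchy_schwarz (hsub g (T g)) (hsub x (T x))).
  rewrite E, !(hinner_proj_compl Ts T hT), Tx, hinner_scal, hinner_scal_r in C.
  rewrite (hinner_proj_compl Ts T hT x), Tx, hinner_scal, hinner_scal_r.
  generalize (hinner_pos _ (T g)). nra.
Qed.

Lemma witness_dist_Ker x g : Ss g -> orth_compl Ss x -> T x = hscal (-1) (T g) ->
  hnorm (T g) * hnorm x <= Defs.dist g Ker * hnorm (hsub x (T x)).
Proof.
  intros Sg Ox Tx.
  assert (Key : forall z, Ker z -> hnorm (T g) * hnorm x <= hnorm (hsub g z) * hnorm (hsub x (T x))).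
  { intros z Kz.
    assert (Tgz : T (hsub g z) = T g) by (rewrite (proj_sub Ts T hTs hT), (Ker_T z Kz); hvec_ring).
    assert (C := witness_cauchy_schwarz x (hsub g z)).
    rewrite Tgz in C. rewrite hinner_sym in C.
    specialize (C (Ox _ (closed_subspace_sub Ss hSs _ _ Sg (proj1 Kz))) Tx).
    apply le_of_sqr_le; [apply Rmult_le_pos; apply hnorm_ge0|].
    replace (hnorm (T g) * hnorm x * (hnorm (T g) * hnorm x))
      with (hnorm (T g) * hnorm (T g) * (hnorm x * hnorm x)) by ring.
    replace (hnorm (hsub g z) * hnorm (hsub x (T x)) * (hnorm (hsub g z) * hnorm (hsub x (T x))))
      with (hnorm (hsub g z) * hnorm (hsub g z) * (hnorm (hsub x (T x)) * hnorm (hsub x (T x)))) by ring.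
    rewrite !hnorm_sq. exact C. }
  assert (K0 : Ker hzero) by apply (closed_subspace_zero _ Ker_closed).
  destruct (hnorm_ge0 (hsub x (T x))) as [Np|N0].
  - apply Rmult_le_reg_r with (/ hnorm (hsub x (T x))); [apply Rinv_0_lt_compat; auto|].
    rewrite (Rmult_assoc (Defs.dist g Ker)), Rinv_r, Rmult_1_r by lra.
    apply dist_ge; auto. intros z Kz.
    apply Rmult_le_reg_r with (hnorm (hsub x (T x))); auto.
    rewrite Rmult_assoc, Rinv_l, Rmult_1_r by lra. auto.
  - rewrite <- N0, Rmult_0_r. specialize (Key hzero K0). rewrite <- N0, Rmult_0_r in Key. exact Key.
Qed.

Lemma nu_ratio_ge_gamma r : nu_ratios r -> gam <= r.
Proof.
  intros [x [[y [Oy ->]] [Hx ->]]].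
  set (x := hsub y (S y)) in *. set (g := S y).
  assert (Px := hnorm_pos x Hx).
  assert (Tx : T x = hscal (-1) (T g)) by (apply T_witness; auto).
  destruct (classic (orth_compl Ts g)) as [Og|Og].
  - assert (Tx0 : T x = hzero) by (rewrite Tx, (proj1 (Tperp_iff g) Og); hvec_ring).
    rewrite Tx0. replace (hsub x hzero) with x by hvec_ring.
    replace (hnorm x / hnorm x) with 1 by (field; lra). apply gamma_bounds.
  - assert (Sg : Ss g) by apply (proj_in Ss S hS).
    assert (W := witness_dist_Ker x g Sg (proj_compl_in Ss S hS y) Tx).
    assert (G := gamma_dist_le g Sg Og).
    assert (PT : 0 < hnorm (T g)) by (apply hnorm_pos; rewrite <- Tperp_iff; auto).
    assert (gam * hnorm x <= hnorm (hsub x (T x))).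
    { apply Rmult_le_reg_l with (hnorm (T g)); auto.
      assert (G0 := proj1 gamma_bounds).
      apply Rle_trans with (gam * (Defs.dist g Ker * hnorm (hsub x (T x)))).
      - replace (hnorm (T g) * (gam * hnorm x)) with (gam * (hnorm (T g) * hnorm x)) by ring.
        apply Rmult_le_compat_l; auto.
      - rewrite <- Rmult_assoc. apply Rmult_le_compat_r; auto. apply hnorm_ge0. }
    apply Rmult_le_reg_r with (hnorm x); auto. unfold Rdiv. rewrite Rmult_assoc, Rinv_l; lra.
Qed.

Lemma gamma_le_nu : (exists r, nu_ratios r) -> gam <= Rinf nu_ratios.
Proof. intros [r Hr]. apply (Rinf_ge _ _ _ Hr), nu_ratio_ge_gamma. Qed.

Definition approx_eigen (lam : R) : Prop := forall eta, 0 < eta ->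
  exists u, Ss u /\ 0 < hinner u u /\ hinner (shift lam u) (shift lam u) < eta * hinner u u.

Lemma approx_eigen_unit lam : approx_eigen lam ->
  forall d, 0 < d -> exists v, Ss v /\ hinner v v = 1 /\ hinner (shift lam v) (shift lam v) < d.
Proof.
  intros Ha d Hd. destruct (Ha d Hd) as [u [Su [Pu Eu]]].
  assert (Hu : u <> hzero) by (intro E; rewrite E, hinner_zero_l in Pu; lra).
  set (s := / hnorm u).
  assert (ss : s * s * hinner u u = 1).
  { generalize (hinner_normalize u Hu). fold s. rewrite hinner_scal, hinner_scal_r. lra. }
  exists (hscal s u). split; [apply closed_subspace_scal; auto|]. split; [apply hinner_normalize; auto|].
  replace (shift lam (hscal s u)) with (hscal s (shift lam u)) by (unfold shift; rewrite ST_scal; hvec_ring).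
  rewrite hinner_scal, hinner_scal_r, <- Rmult_assoc.
  replace d with (s * s * (d * hinner u u))
    by (transitivity (d * (s * s * hinner u u)); [ring|rewrite ss; ring]).
  apply Rmult_lt_compat_l; [|exact Eu].
  assert (0 < s) by (apply Rinv_0_lt_compat, hnorm_pos, Hu). nra.
Qed.

Lemma spectrum_ST lam : approx_eigen lam -> in_spectrum_restr ST Ss lam.
Proof.
  intro Ha. apply in_spectrum_of_approx; [exact hSs|intros; apply ST_in|exact Ha].
Qed.

Lemma spectrum_TS lam : approx_eigen lam -> 0 < lam -> in_spectrum_restr (fun x => T (S x)) Ts lam.
Proof.
  intros Ha Hl. apply in_spectrum_of_approx; [exact hTs|intros; apply (proj_in Ts T hT)|].
  intros eta' He'.
  set (eta := Rmin (lam * lam / 4) (eta' * lam / 2)).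
  assert (Ep : 0 < eta) by (apply Rmin_glb_lt; nra).
  destruct (Ha eta Ep) as [u [Su [Pu Eu]]].
  set (e := shift lam u) in *.
  exists (T u). split; [apply (proj_in Ts T hT)|].
  replace (hsub (T (S (T u))) (hscal lam (T u))) with (T e)
    by (unfold e, shift, ST; rewrite (proj_sub Ts T hTs hT), (proj_scal Ts T hTs hT); auto).
  assert (Tu : hinner (T u) (T u) = lam * hinner u u + hinner e u).
  { rewrite <- hinner_ST; auto. unfold e, shift. rewrite hinner_sub_l, hinner_scal. ring. }
  assert (CS := cauchy_schwarz e u).
  assert (E1 : eta <= lam * lam / 4) by apply Rmin_l.
  assert (E2 : eta <= eta' * lam / 2) by apply Rmin_r.
  (* |<e, u>| <= (lam / 2) |u|^2, so |T u|^2 >= (lam / 2) |u|^2 *)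
  assert (Eu2 : hinner e e * hinner u u < lam * lam / 4 * hinner u u * hinner u u) by nra.
  assert (B1 : - (lam / 2 * hinner u u) < hinner e u).
  { apply Rnot_le_lt; intro h.
    assert ((lam / 2 * hinner u u) * (lam / 2 * hinner u u) <= hinner e u * hinner e u)
      by (replace (hinner e u * hinner e u) with ((- hinner e u) * (- hinner e u)) by ring;
          apply Rmult_le_compat; nra).
    nra. }
  assert (Te := proj_hinner_le Ts T hT e).
  split; nra.
Qed.

(* For a unit near-eigenvector [v] of [ST], the element [x] of [S^perp(T^perp)] built from
   [y = v - T v] is the witness for [nu <= sqrt lam]. *)
Lemma near_eigen_witness lam v e x : Ss v -> hinner v v = 1 -> e = shift lam v ->
  x = hsub (hsub v (T v)) (S (hsub v (T v))) ->
  hinner x x = lam * (1 - lam) + hinner e e + hinner e v - 2 * hinner e (T v) /\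
  hinner (hsub x (T x)) (hsub x (T x)) = lam * lam * (1 - lam) + hinner e e - hinner e (T e)
    + (2 * lam - lam * lam) * hinner e v - 2 * lam * hinner e (T v).
Proof.
  intros Sv Vv He Hx.
  assert (Ex : x = hadd e (hsub (hscal lam v) (T v))).
  { rewrite Hx, He, (proj_sub Ss S hSs hS), (proj_fix Ss S hSs hS v Sv). unfold shift, ST. hvec_ring. }
  assert (ETx : hsub x (T x) = hadd (hsub e (T e)) (hscal lam (hsub v (T v)))).
  { rewrite Ex, (proj_add Ts T hTs hT), (proj_sub Ts T hTs hT), (proj_scal Ts T hTs hT),
      (proj_idem Ts T hTs hT). hvec_ring. }
  assert (Hp : hinner (T v) (T v) = lam + hinner e v).
  { rewrite <- hinner_ST, He by auto. unfold shift. rewrite hinner_sub_l, hinner_scal, Vv. ring. }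
  assert (Tvv : hinner v (T v) = hinner (T v) (T v))
    by (rewrite hinner_sym; apply (hinner_proj_l Ts T hT)).
  assert (Tev : hinner (T e) v = hinner e (T v)) by apply (proj_sym Ts T hT).
  assert (TeTv : hinner (T e) (T v) = hinner e (T v))
    by (rewrite <- (hinner_proj_l Ts T hT); apply (proj_sym Ts T hT)).
  assert (TeTe : hinner (T e) (T e) = hinner e (T e))
    by (rewrite <- (hinner_proj_l Ts T hT); apply (proj_sym Ts T hT)).
  split.
  - rewrite Ex. repeat (rewrite hinner_add || rewrite hinner_sub_l || rewrite hinner_scal ||
                        rewrite hinner_add_r || rewrite hinner_sub_r || rewrite hinner_scal_r).
    rewrite (hinner_sym _ v e), (hinner_sym _ (T v) e), (hinner_sym _ (T v) v), Tvv, Hp, Vv. ring.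
  - rewrite ETx. repeat (rewrite hinner_add || rewrite hinner_sub_l || rewrite hinner_scal ||
                         rewrite hinner_add_r || rewrite hinner_sub_r || rewrite hinner_scal_r).
    rewrite (hinner_sym _ v e), (hinner_sym _ (T v) e), (hinner_sym _ (T e) e), (hinner_sym _ v (T e)),
      (hinner_sym _ (T v) (T e)), (hinner_sym _ (T v) v), Tev, TeTv, TeTe, Tvv, Hp, Vv.
    ring.
Qed.

Lemma near_eigen_witness_bounds lam v x dl : Ss v -> hinner v v = 1 -> 0 < lam < 1 ->
  0 < dl <= 1 -> hinner (shift lam v) (shift lam v) < dl * dl ->
  x = hsub (hsub v (T v)) (S (hsub v (T v))) ->
  lam * (1 - lam) - 3 * dl <= hinner x x /\
  hinner (hsub x (T x)) (hsub x (T x)) <= lam * (lam * (1 - lam)) + 6 * dl.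
Proof.
  intros Sv Vv Hl Hdl Ev Hx. set (e := shift lam v) in *.
  destruct (near_eigen_witness lam v e x Sv Vv eq_refl Hx) as [X2 Y2].
  (* every error term is bounded by [dl], by Cauchy-Schwarz *)
  assert (Edl : hinner e e <= dl) by nra.
  assert (A3 : - dl <= hinner e v <= dl).
  { apply bounded_of_sqr_le; [lra|]. generalize (cauchy_schwarz e v). rewrite Vv. nra. }
  assert (A4 : - dl <= hinner e (T v) <= dl).
  { apply bounded_of_sqr_le; [lra|].
    generalize (cauchy_schwarz e (T v)) (proj_hinner_le Ts T hT v) (hinner_pos _ (T v)) (hinner_pos _ e).
    rewrite Vv. nra. }
  assert (A2 : 0 <= hinner e (T e))
    by (rewrite (hinner_sym _ e (T e)), (hinner_proj_l Ts T hT); apply hinner_pos).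
  split; [rewrite X2; generalize (hinner_pos _ e); lra|].
  assert (0 <= 2 * lam - lam * lam <= 1) by nra.
  assert ((2 * lam - lam * lam) * hinner e v <= (2 * lam - lam * lam) * dl)
    by (apply Rmult_le_compat_l; lra).
  assert ((2 * lam - lam * lam) * dl <= 1 * dl) by (apply Rmult_le_compat_r; lra).
  assert (lam * - hinner e (T v) <= lam * dl) by (apply Rmult_le_compat_l; lra).
  assert (lam * dl <= 1 * dl) by (apply Rmult_le_compat_r; lra).
  rewrite Y2. lra.
Qed.

Lemma nu_le_sqrt lam : (exists r, nu_ratios r) -> approx_eigen lam -> 0 < lam < 1 ->
  Rinf nu_ratios <= sqrt lam.
Proof.
  intros Hne Ha Hl. set (nu := Rinf nu_ratios).
  assert (N0 : 0 <= nu) by (destruct Hne as [r Hr]; apply (Rinf_ge _ _ _ Hr), nu_ratio_ge0).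
  assert (N1 : nu <= 1) by apply nu_le1, Hne.
  apply Rnot_lt_le; intro Hlt.
  assert (Vg : lam < nu * nu) by (generalize (sqrt_pos lam) (sqrt_sqrt lam ltac:(lra)); nra).
  set (L := lam * (1 - lam)). assert (Lp : 0 < L) by (unfold L; nra).
  set (dl := Rmin 1 ((nu * nu - lam) * L / 20)).
  assert (dlp : 0 < dl) by (apply Rmin_glb_lt; [lra|]; apply Rdiv_lt_0_compat; nra).
  assert (dl1 : dl <= 1) by apply Rmin_l.
  assert (dl2 : dl <= (nu * nu - lam) * L / 20) by apply Rmin_r.
  assert (dl3 : dl <= L / 20) by (assert (nu * nu <= 1) by nra; nra).
  destruct (approx_eigen_unit lam Ha (dl * dl) ltac:(nra)) as [v [Sv [Vv Ev]]].
  set (y := hsub v (T v)). set (x := hsub y (S y)).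
  destruct (near_eigen_witness_bounds lam v x dl Sv Vv Hl (conj dlp dl1) Ev eq_refl) as [Xlb Yub].
  fold L in Xlb, Yub.
  assert (Hx : x <> hzero).
  { intro E. assert (hinner x x = 0) by (rewrite E; apply hinner_zero_l). lra. }
  assert (Nx : nu_ratios (hnorm (hsub x (T x)) / hnorm x)).
  { exists x. split; [exists y; split; auto; apply (proj_compl_in Ts T hT)|auto]. }
  assert (Sq := nu_sq_le x Nx Hx). fold nu in Sq.
  assert (nu * nu * (L - 3 * dl) <= nu * nu * hinner x x) by (apply Rmult_le_compat_l; nra).
  assert (nu * nu * dl <= dl) by nra.
  nra.
Qed.

Lemma ST_ge_on_range_gamma_sq : ST_ge_on_range (gam * gam).
Proof.
  intros u Su. rewrite (hinner_ST (ST u) (ST_in u)). apply gamma_sq_Mspace, ST_in_Mspace.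
Qed.

Lemma Ker_Mspace_decomp_gamma g : 0 < gam -> Ss g -> exists z, Ker z /\ Mspace (hsub g z).
Proof.
  intros Gp Sg. assert (G1 := proj2 gamma_bounds).
  destruct (Ker_Mspace_decomp (gam * gam) g) as [z [Kz [Mz _]]];
    eauto using ST_ge_on_range_gamma_sq; split; nra.
Qed.

Lemma Ker_Mspace_unique g z1 z2 : Ker z1 -> Ker z2 -> Mspace (hsub g z1) -> Mspace (hsub g z2) -> z1 = z2.
Proof.
  intros K1 K2 M1 M2. apply hsub_eq0, hinner_def.
  assert (Kd : Ker (hsub z1 z2)) by (apply closed_subspace_sub; auto using Ker_closed).
  assert (E1 := proj2 M1 _ Kd). assert (E2 := proj2 M2 _ Kd).
  rewrite !hinner_sub_l in E1, E2 |- *. lra.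
Qed.

Lemma shift_gamma_sq_Mspace v : Mspace v ->
  hinner (shift (gam * gam) v) (shift (gam * gam) v) <= hinner (T v) (T v) - gam * gam * hinner v v.
Proof.
  intro Mv. rewrite shift_STpoly.
  assert (Form : forall x, Mspace x ->
    hinner (STpoly (- (gam * gam)) 1 0 x) x = hinner (T x) (T x) - gam * gam * hinner x x)
    by (intros x Mx; rewrite hinner_STpoly by apply Mx; ring).
  rewrite <- Form by auto. rewrite <- (Rmult_1_l (hinner (STpoly _ _ _ v) v)).
  apply (STpoly_sq_le Mspace); auto using Mspace_closed, ST_in_Mspace; [lra|intros x Mx; apply Mx| |].
  - intros x Mx. rewrite Form by auto. generalize (gamma_sq_Mspace x Mx). lra.
  - intros x Mx. rewrite Form by auto.
    generalize (hinner_T_le x) (hinner_pos _ x) (proj1 gamma_bounds). nra.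
Qed.

Lemma approx_eigen_gamma_sq : ~ S_sub_Tperp -> 0 < gam -> approx_eigen (gam * gam).
Proof.
  intros Hn Gp eta He. assert (G1 := proj2 gamma_bounds).
  set (dl := Rmin 1 (eta / (2 * gam + 2))).
  assert (dlp : 0 < dl) by (apply Rmin_glb_lt; [lra|apply Rdiv_lt_0_compat; lra]).
  assert (dl1 : dl <= 1) by apply Rmin_l.
  assert (dl2 : dl * (2 * gam + 2) <= eta).
  { apply Rmult_le_reg_r with (/ (2 * gam + 2)); [apply Rinv_0_lt_compat; lra|].
    rewrite Rmult_assoc, Rinv_r by lra. generalize (Rmin_r 1 (eta / (2 * gam + 2))). fold dl. lra. }
  destruct (gamma_approx dl Hn dlp) as [g [Sg [Ng Hg]]].
  destruct (Ker_Mspace_decomp_gamma g Gp Sg) as [z [Kz Mv]].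
  set (v := hsub g z) in *.
  assert (Tv : T v = T g) by (unfold v; rewrite (proj_sub Ts T hTs hT), (Ker_T z Kz); hvec_ring).
  assert (Hv : hnorm (T v) < (gam + dl) * hnorm v).
  { rewrite Tv. eapply Rlt_le_trans; [exact Hg|]. apply Rmult_le_compat_l; [lra|]. apply dist_le, Kz. }
  assert (Vp : 0 < hnorm v) by (generalize (hnorm_ge0 (T v)); nra).
  assert (Hv2 : hinner (T v) (T v) < (gam + dl) * (gam + dl) * hinner v v).
  { rewrite <- !hnorm_sq. generalize (hnorm_ge0 (T v)). nra. }
  exists v. split; [apply Mv|]. split; [rewrite <- hnorm_sq; nra|].
  eapply Rle_lt_trans; [apply shift_gamma_sq_Mspace, Mv|].
  assert (0 < hinner v v) by (rewrite <- hnorm_sq; nra).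
  assert ((gam + dl) * (gam + dl) - gam * gam <= eta) by nra.
  assert (((gam + dl) * (gam + dl) - gam * gam) * hinner v v <= eta * hinner v v)
    by (apply Rmult_le_compat_r; lra).
  lra.
Qed.

Definition Kpart u : H := epsilon (inhabits hzero) (fun z => Ker z /\ Mspace (hsub u z)).

Lemma Kpart_spec u : 0 < gam -> Ss u -> Ker (Kpart u) /\ Mspace (hsub u (Kpart u)).
Proof.
  intros Gp Su. apply (epsilon_spec (inhabits hzero) (fun z => Ker z /\ Mspace (hsub u z))).
  apply Ker_Mspace_decomp_gamma; auto.
Qed.

Section Resolvent.
Variable lam : R.
Hypotheses (hgam : 0 < gam) (hlam : 0 < lam < gam * gam).

Lemma shift_Mspace_lower s : Mspace s -> (gam * gam - lam) * hnorm s <= hnorm (shift lam s).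
Proof.
  intros Ms.
  assert (E : hinner (shift lam s) s = hinner (T s) (T s) - lam * hinner s s)
    by (unfold shift; rewrite hinner_sub_l, hinner_scal, hinner_ST by apply Ms; reflexivity).
  assert (G := gamma_sq_Mspace s Ms).
  assert (C := hinner_le_norm (shift lam s) s).
  rewrite <- (hnorm_sq s), <- (hnorm_sq (T s)) in E, G.
  assert (N2 := hnorm_ge0 (shift lam s)).
  destruct (hnorm_ge0 s) as [N|N].
  - apply Rmult_le_reg_r with (hnorm s); auto. nra.
  - rewrite <- N. lra.
Qed.

Lemma shift_Mspace_inj s1 s2 : Mspace s1 -> Mspace s2 -> shift lam s1 = shift lam s2 -> s1 = s2.
Proof.
  intros M1 M2 E. apply hsub_eq0, hnorm_eq0.
  assert (Md : Mspace (hsub s1 s2)) by (apply closed_subspace_sub; auto using Mspace_closed).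
  assert (L := shift_Mspace_lower _ Md).
  assert (Ed : shift lam (hsub s1 s2) = hzero).
  { replace (shift lam (hsub s1 s2)) with (hsub (shift lam s1) (shift lam s2))
      by (unfold shift; rewrite ST_sub; hvec_ring).
    rewrite E. unfold hsub. apply hadd_opp. }
  rewrite Ed, hnorm_zero in L.
  apply Rle_antisym; [|apply hnorm_ge0].
  apply Rmult_le_reg_l with (gam * gam - lam); lra.
Qed.

Lemma compl_ST_Mspace_bound x : Mspace x -> hnorm (hsub x (ST x)) <= (1 - gam * gam) * hnorm x.
Proof.
  intro Mx. assert (G1 := proj2 gamma_bounds).
  replace (hsub x (ST x)) with (STpoly 1 (-1) 0 x) by (unfold STpoly; hvec_ring).
  assert (Form : forall y, Mspace y -> hinner (STpoly 1 (-1) 0 y) y = hinner y y - hinner (T y) (T y))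
    by (intros y My; rewrite hinner_STpoly by apply My; ring).
  assert (Pos : forall y, Mspace y -> 0 <= hinner (STpoly 1 (-1) 0 y) y)
    by (intros y My; rewrite Form by auto; generalize (hinner_T_le y); lra).
  assert (Bd : forall y, Mspace y -> hinner (STpoly 1 (-1) 0 y) y <= (1 - gam * gam) * hinner y y)
    by (intros y My; rewrite Form by auto; generalize (gamma_sq_Mspace y My); lra).
  assert (Sq := STpoly_sq_le Mspace 1 (-1) 0 (1 - gam * gam) ltac:(nra) Mspace_closed
    (fun y My => proj1 My) (fun y _ => ST_in_Mspace y) Pos Bd x Mx).
  specialize (Bd x Mx). rewrite <- (hnorm_sq x) in Bd.
  assert (0 <= 1 - gam * gam) by nra.
  apply hnorm_le_sqr; [apply Rmult_le_pos; [lra|apply hnorm_ge0]|]. nra.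
Qed.

Lemma shift_Mspace_onto w : Mspace w -> exists s, Mspace s /\ shift lam s = w.
Proof.
  intro Mw. assert (G1 := proj2 gamma_bounds).
  assert (G2 : gam * gam <= 1) by nra.
  (* [shift lam s = w] iff [s] is a fixed point of the contraction [K] below *)
  set (K := fun x => hscal (/ (1 - lam)) (hsub x (ST x))).
  set (q := (1 - gam * gam) / (1 - lam)).
  assert (Hq : 0 <= q < 1).
  { unfold q. split; [apply Rmult_le_pos; [lra|apply Rlt_le, Rinv_0_lt_compat; lra]|].
    apply Rmult_lt_reg_r with (1 - lam); [lra|]. unfold Rdiv. rewrite Rmult_assoc, Rinv_l; lra. }
  assert (KM : forall x, Mspace x -> Mspace (K x)).
  { intros x Mx. apply closed_subspace_scal, closed_subspace_sub; auto using Mspace_closed, ST_in_Mspace. }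
  assert (Klin : forall x y, K (hsub x y) = hsub (K x) (K y))
    by (intros; unfold K; rewrite ST_sub; hvec_ring).
  assert (Kb : forall x, Mspace x -> hnorm (K x) <= q * hnorm x).
  { intros x Mx. unfold K. rewrite hnorm_scal, Rabs_right by (apply Rle_ge, Rlt_le, Rinv_0_lt_compat; lra).
    replace (q * hnorm x) with (/ (1 - lam) * ((1 - gam * gam) * hnorm x)) by (unfold q, Rdiv; ring).
    apply Rmult_le_compat_l; [apply Rlt_le, Rinv_0_lt_compat; lra|].
    apply compl_ST_Mspace_bound, Mx. }
  destruct (contraction_fixed_point Mspace Mspace_closed K q (hscal (/ (1 - lam)) w) Hq KM Klin Kb)
    as [s [Ms Es]]; [apply closed_subspace_scal; auto using Mspace_closed|].
  exists s. split; auto.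
  replace w with (hscal (1 - lam) (hsub s (K s)))
    by (rewrite Es at 1; apply hvec_ext; intro; rewrite hinner_scal, hinner_sub_l, hinner_add, hinner_scal;
        field; lra).
  unfold K, shift. apply hvec_ext; intro.
  repeat (rewrite hinner_scal || rewrite hinner_sub_l). field. lra.
Qed.

Definition Msolve w : H := epsilon (inhabits hzero) (fun s => Mspace s /\ shift lam s = w).

Lemma Msolve_spec w : Mspace w -> Mspace (Msolve w) /\ shift lam (Msolve w) = w.
Proof.
  intro Mw. apply (epsilon_spec (inhabits hzero) (fun s => Mspace s /\ shift lam s = w)).
  apply shift_Mspace_onto, Mw.
Qed.

(* The inverse of [ST - lam] on [Ss = Ker (+) Mspace]: [-1/lam] on [Ker], [Msolve] on [Mspace]. *)
Definition resolvent u : H := hadd (hscal (- / lam) (Kpart u)) (Msolve (hsub u (Kpart u))).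

Lemma resolvent_in u : Ss u -> Ss (resolvent u).
Proof.
  intro Su. destruct (Kpart_spec u hgam Su) as [Kz Mv].
  unfold resolvent. apply (closed_subspace_add Ss hSs).
  - apply (closed_subspace_scal Ss hSs), Kz.
  - apply (Msolve_spec _ Mv).
Qed.

Lemma resolvent_bound u : Ss u -> hnorm (resolvent u) <= (/ lam + / (gam * gam - lam)) * hnorm u.
Proof.
  intro Su. destruct (Kpart_spec u hgam Su) as [Kz Mv].
  set (z := Kpart u) in *. set (v := hsub u z) in *.
  assert (Pyth : hinner u u = hinner z z + hinner v v).
  { replace u with (hadd z v) at 1 2 by (unfold v; hvec_ring).
    rewrite hinner_add, !hinner_add_r, (hinner_sym _ z v), (proj2 Mv z Kz). ring. }
  assert (Nz : hnorm z <= hnorm u) by (apply hnorm_le_hinner; generalize (hinner_pos _ v); lra).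
  assert (Nv : hnorm v <= hnorm u) by (apply hnorm_le_hinner; generalize (hinner_pos _ z); lra).
  destruct (Msolve_spec v Mv) as [Ms Es].
  assert (L := shift_Mspace_lower _ Ms). rewrite Es in L.
  unfold resolvent. fold z v.
  eapply Rle_trans; [apply hnorm_triangle|].
  rewrite hnorm_scal, Rabs_Ropp, Rabs_right by (apply Rle_ge, Rlt_le, Rinv_0_lt_compat; lra).
  assert (S1 : hnorm (Msolve v) <= / (gam * gam - lam) * hnorm u).
  { apply Rmult_le_reg_l with (gam * gam - lam); [lra|].
    rewrite <- Rmult_assoc, Rinv_r, Rmult_1_l by lra. lra. }
  assert (S2 : / lam * hnorm z <= / lam * hnorm u)
    by (apply Rmult_le_compat_l; [apply Rlt_le, Rinv_0_lt_compat; lra|auto]).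
  lra.
Qed.

Lemma shift_Ker_Mspace z v : Ker z -> shift lam (hadd z v) = hadd (hscal (- lam) z) (shift lam v).
Proof. intro Kz. unfold shift. rewrite ST_add, (ST_Ker z Kz). hvec_ring. Qed.

Lemma resolvent_shift u : Ss u -> resolvent (shift lam u) = u.
Proof.
  intro Su. destruct (Kpart_spec u hgam Su) as [Kz Mv].
  set (z := Kpart u) in *. set (v := hsub u z) in *.
  assert (Eu : shift lam u = hadd (hscal (- lam) z) (shift lam v))
    by (rewrite <- shift_Ker_Mspace by auto; f_equal; unfold v; hvec_ring).
  assert (Mw : Mspace (shift lam v)) by (apply shift_in_Mspace, Mv).
  assert (Kw : Ker (hscal (- lam) z)) by (apply closed_subspace_scal; auto using Ker_closed).
  assert (Rest : hsub (shift lam u) (hscal (- lam) z) = shift lam v) by (rewrite Eu; hvec_ring).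
  assert (Zw : Kpart (shift lam u) = hscal (- lam) z).
  { destruct (Kpart_spec (shift lam u) hgam (shift_in lam u Su)) as [K1 M1].
    apply (Ker_Mspace_unique (shift lam u)); auto. rewrite Rest; auto. }
  destruct (Msolve_spec _ Mw) as [Ms Es].
  assert (Sv : Msolve (shift lam v) = v) by (apply shift_Mspace_inj; auto).
  unfold resolvent. rewrite Zw, Rest, Sv. unfold v. apply hvec_ext; intro.
  repeat (rewrite hinner_add || rewrite hinner_sub_l || rewrite hinner_scal). field. lra.
Qed.

Lemma shift_resolvent u : Ss u -> shift lam (resolvent u) = u.
Proof.
  intro Su. destruct (Kpart_spec u hgam Su) as [Kz Mv].
  destruct (Msolve_spec _ Mv) as [Ms Es].
  unfold resolvent. rewrite shift_Ker_Mspace, Es by (apply closed_subspace_scal; auto using Ker_closed).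
  apply hvec_ext; intro.
  repeat (rewrite hinner_add || rewrite hinner_sub_l || rewrite hinner_scal). field. lra.
Qed.

Lemma ST_not_in_spectrum_below : ~ in_spectrum_restr ST Ss lam.
Proof.
  intro Sp. apply Sp. exists resolvent. split; [exact resolvent_in|]. split.
  - exists (/ lam + / (gam * gam - lam)). exact resolvent_bound.
  - split; [exact resolvent_shift|exact shift_resolvent].
Qed.

End Resolvent.

Lemma unit_in_S : ~ S_sub_Tperp -> exists v, Ss v /\ hinner v v = 1.
Proof.
  intro Hn. destruct (not_all_ex_not _ _ Hn) as [g Hg]. apply imply_to_and in Hg.
  destruct Hg as [Sg Ng].
  assert (Hg : g <> hzero)
    by (intro E; apply Ng; rewrite E; apply (closed_subspace_zero _ (orth_compl_closed Ts))).
  exists (hscal (/ hnorm g) g). split; [apply closed_subspace_scal; auto|apply hinner_normalize, Hg].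
Qed.

Lemma ST_cauchy_schwarz u : Ss u ->
  hinner (ST u) (ST u) * hinner (ST u) (ST u) <= hinner (ST u) u * hinner (ST (ST u)) (ST u).
Proof.
  intro Su. apply discriminant_le; [rewrite hinner_ST by apply ST_in; apply hinner_pos|].
  intro t. assert (Sx : Ss (hadd u (hscal t (ST u)))) by (apply closed_subspace_comb; auto using ST_in).
  assert (E := hinner_pos _ (T (hadd u (hscal t (ST u))))).
  rewrite <- (hinner_ST _ Sx), ST_add, ST_scal in E.
  rewrite hinner_add, !hinner_add_r, !hinner_scal, !hinner_scal_r, (ST_sym (ST u) u) in E
    by auto using ST_in.
  nra.
Qed.

Definition qform (c : R) x : R := hinner (ST x) (ST x) - c * hinner (ST x) x.

Definition qform_ratios (c r : R) : Prop := exists v, Ss v /\ hinner v v = 1 /\ r = qform c v.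

Lemma qform_ratio_lb c r : qform_ratios c r -> - (c * c / 4) <= r.
Proof.
  intros [v [Sv [Vv ->]]]. unfold qform.
  assert (E := hinner_pos _ (hsub (ST v) (hscal (c / 2) v))).
  rewrite !hinner_sub_l, !hinner_sub_r, !hinner_scal, !hinner_scal_r, Vv, (hinner_sym _ v (ST v)) in E.
  nra.
Qed.

Lemma qform_inf_le c x : ~ S_sub_Tperp -> Ss x -> Rinf (qform_ratios c) * hinner x x <= qform c x.
Proof.
  intros Hn Sx. destruct (Req_dec (hinner x x) 0) as [Z|Z].
  - replace x with (@hzero H) by (symmetry; apply hinner_def, Z).
    unfold qform. rewrite (ST_Ker hzero (closed_subspace_zero _ Ker_closed)), !hinner_zero_l. lra.
  - assert (Hx : x <> hzero) by (intro E; apply Z; rewrite E; apply hinner_zero_l).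
    set (s := / hnorm x).
    assert (ss : s * s * hinner x x = 1).
    { generalize (hinner_normalize x Hx). fold s. rewrite hinner_scal, hinner_scal_r. lra. }
    assert (Q : qform_ratios c (qform c (hscal s x))).
    { exists (hscal s x). split; [apply closed_subspace_scal; auto|]. split; auto.
      apply hinner_normalize, Hx. }
    assert (L := Rinf_le _ _ _ (qform_ratio_lb c) Q).
    unfold qform in L |- *. rewrite ST_scal, !hinner_scal, !hinner_scal_r in L.
    assert (Xp : 0 < hinner x x) by (apply hinner_pos_lt, Hx).
    set (Y := hinner (ST x) (ST x) - c * hinner (ST x) x) in *.
    assert (Ys : s * (s * hinner (ST x) (ST x)) - c * (s * (s * hinner (ST x) x)) = s * s * Y)
      by (unfold Y; ring).
    rewrite Ys in L.
    assert (0 <= (s * s * Y - Rinf (qform_ratios c)) * hinner x x) by (apply Rmult_le_pos; lra).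
    assert (s * s * Y * hinner x x = Y) by (transitivity (Y * (s * s * hinner x x)); [ring|rewrite ss; ring]).
    nra.
Qed.

Lemma ST_ge_on_range_of_qform c : (forall w, Ss w -> 0 <= qform c w) -> ST_ge_on_range c.
Proof.
  intros Hq u Su. assert (L := ST_cauchy_schwarz u Su).
  assert (C := Hq u Su). unfold qform in C.
  assert (Pu : 0 <= hinner (ST u) u) by (rewrite hinner_ST by auto; apply hinner_pos).
  assert (P2 := hinner_pos _ (ST u)).
  destruct Pu as [Pu|Z].
  - apply Rmult_le_reg_l with (hinner (ST u) u); [lra|].
    assert (c * hinner (ST u) u * hinner (ST u) (ST u) <= hinner (ST u) (ST u) * hinner (ST u) (ST u))
      by (apply Rmult_le_compat_r; lra).
    nra.
  - assert (Z2 : hinner (ST u) (ST u) = 0) by (generalize (ST_sq_le u Su); lra).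
    rewrite Z2, Rmult_0_r, (hinner_ST (ST u) (ST_in u)). apply hinner_pos.
Qed.

Lemma gamma_ge_of_range c : ~ S_sub_Tperp -> 0 < c <= 1 -> ST_ge_on_range c ->
  1 - sqrt (1 - c) <= gam.
Proof.
  intros Hn Hc Hr. set (q := sqrt (1 - c)).
  assert (q1 : q < 1) by apply (sqrt_one_sub_bounds c Hc).
  rewrite gamma_Rinf by auto. destruct (gap_ratios_inhabited Hn) as [r0 Hr0].
  apply (Rinf_ge _ _ _ Hr0).
  intros r [g [Sg [Ng ->]]]. rewrite dist_Tperp. fold Ker.
  destruct (Ker_Mspace_decomp c g Hc Hr Sg) as [z [Kz [_ Bz]]]. fold q in Bz.
  assert (D := dist_le g Ker z Kz).
  assert (AT : hnorm (ST g) <= hnorm (T g)) by apply (proj_norm_le Ss S hS).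
  assert (DP := dist_Ker_pos g Ng).
  apply Rmult_le_reg_r with (Defs.dist g Ker); auto.
  unfold Rdiv. rewrite Rmult_assoc, Rinv_l, Rmult_1_r by lra.
  assert (hnorm (hsub g z) * (1 - q) <= hnorm (ST g)).
  { apply Rmult_le_reg_r with (/ (1 - q)); [apply Rinv_0_lt_compat; lra|].
    rewrite Rmult_assoc, Rinv_r, Rmult_1_r by lra. exact Bz. }
  nra.
Qed.

(* If [(ST - r1)(ST - r2)] has unit approximate null vectors, then either [ST - r2] has some,
   or it is bounded below and carries them to approximate null vectors of [ST - r1]. *)
Lemma approx_eigen_of_product r1 r2 :
  (forall eta, 0 < eta -> exists v, Ss v /\ hinner v v = 1 /\
     hinner (shift r1 (shift r2 v)) (shift r1 (shift r2 v)) < eta) ->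
  approx_eigen r1 \/ approx_eigen r2.
Proof.
  intros Hsmall. destruct (classic (approx_eigen r2)) as [A2|A2]; [now right|left].
  destruct (not_all_ex_not _ _ A2) as [e0 A2']. apply imply_to_and in A2'. destruct A2' as [e0p A2'].
  intros eta He.
  destruct (Hsmall (eta * e0)) as [v [Sv [Vv Qv]]]; [nra|].
  exists (shift r2 v). split; [apply shift_in; auto|].
  assert (Lb : e0 <= hinner (shift r2 v) (shift r2 v)).
  { apply Rnot_lt_le; intro h. apply A2'. exists v. rewrite Vv. split; [auto|split; lra]. }
  split; nra.
Qed.

Lemma STpoly_small_of_qform_inf c : ~ S_sub_Tperp -> 0 < c <= 1/2 ->
  forall eta, 0 < eta -> exists v, Ss v /\ hinner v v = 1 /\
    hinner (STpoly (- Rinf (qform_ratios c)) (- c) 1 v) (STpoly (- Rinf (qform_ratios c)) (- c) 1 v) < eta.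
Proof.
  intros Hn Hc eta He. set (m := Rinf (qform_ratios c)).
  destruct (unit_in_S Hn) as [v0 [Sv0 Vv0]].
  assert (Ne : qform_ratios c (qform c v0)) by (exists v0; auto).
  assert (mlb : - (c * c / 4) <= m) by exact (Rinf_ge _ _ _ Ne (qform_ratio_lb c)).
  assert (Form : forall x, Ss x -> hinner (STpoly (- m) (- c) 1 x) x = qform c x - m * hinner x x)
    by (intros x Sx; rewrite hinner_STpoly, <- hinner_ST by auto; unfold qform; ring).
  assert (P1 : forall x, Ss x -> 0 <= hinner (STpoly (- m) (- c) 1 x) x)
    by (intros x Sx; rewrite Form by auto; generalize (qform_inf_le c x Hn Sx); fold m; lra).
  assert (P2 : forall x, Ss x -> hinner (STpoly (- m) (- c) 1 x) x <= 2 * hinner x x).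
  { intros x Sx. rewrite Form by auto. unfold qform.
    assert (h1 := ST_sq_le x Sx). assert (h2 := hinner_ST x Sx). assert (h3 := hinner_T_le x).
    assert (h4 := hinner_pos _ (T x)). assert (h5 := hinner_pos _ x).
    assert (0 <= c * hinner (ST x) x) by (rewrite h2; apply Rmult_le_pos; lra).
    assert (- m * hinner x x <= 1 * hinner x x) by (apply Rmult_le_compat_r; nra).
    lra. }
  assert (Sq := STpoly_sq_le Ss (- m) (- c) 1 2 ltac:(lra) hSs (fun x Sx => Sx) (fun x _ => ST_in x) P1 P2).
  destruct (Rinf_approx _ _ _ (eta / 2) (qform_ratio_lb c) Ne ltac:(lra)) as [r [[v [Sv [Vv ->]]] Hr]].
  exists v. split; auto. split; auto.
  specialize (Sq v Sv). rewrite Form, Vv in Sq by auto. fold m in Hr. lra.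
Qed.

Lemma small_approx_eigen c : ~ S_sub_Tperp -> gam = 0 -> 0 < c <= 1/2 ->
  exists lam, 0 < lam < c /\ approx_eigen lam.
Proof.
  intros Hn G0 Hc. set (m := Rinf (qform_ratios c)).
  destruct (Rle_or_lt 0 m) as [Hm|Hm].
  - (* [ST >= c] on its range would force [gam > 0] *)
    exfalso.
    assert (Hr : ST_ge_on_range c).
    { apply ST_ge_on_range_of_qform. intros w Sw.
      generalize (qform_inf_le c w Hn Sw) (hinner_pos _ w). fold m. nra. }
    assert (G := gamma_ge_of_range c Hn ltac:(lra) Hr).
    generalize (sqrt_one_sub_bounds c ltac:(lra)). lra.
  - (* factor [t^2 - c t - m = (t - r1) (t - r2)] with [0 < r1 <= r2 < c] *)
    destruct (unit_in_S Hn) as [v0 [Sv0 Vv0]].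
    assert (mlb : - (c * c / 4) <= m)
      by exact (Rinf_ge _ _ _ (ex_intro _ v0 (conj Sv0 (conj Vv0 eq_refl))) (qform_ratio_lb c)).
    set (sq := sqrt (c * c + 4 * m)).
    assert (sq0 : 0 <= sq) by apply sqrt_pos.
    assert (sqq : sq * sq = c * c + 4 * m) by (apply sqrt_sqrt; nra).
    assert (sqc : sq < c) by nra.
    set (r1 := (c - sq) / 2). set (r2 := (c + sq) / 2).
    assert (Fac : forall x, shift r1 (shift r2 x) = STpoly (- m) (- c) 1 x).
    { intro x. rewrite shift_shift. f_equal; unfold r1, r2; nra. }
    destruct (approx_eigen_of_product r1 r2) as [A|A].
    + intros eta He. destruct (STpoly_small_of_qform_inf c Hn Hc eta He) as [v Hv].
      exists v. rewrite Fac. exact Hv.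
    + exists r1. split; [unfold r1; lra|exact A].
    + exists r2. split; [unfold r2; lra|exact A].
Qed.

Lemma Theta_acos s : 0 < s -> approx_eigen (s * s) -> Theta S Ss T Ts (acos s).
Proof.
  intros Hs Ha. replace (s * s) with (s ^ 2) in Ha by ring.
  split; exists s; repeat split; auto; try lra.
  - apply spectrum_ST, Ha.
  - apply spectrum_TS, pow_lt; auto.
Qed.

Lemma Theta_spectrum_pos th : Theta S Ss T Ts th -> th <> PI / 2 ->
  exists s, 0 < s /\ in_spectrum_restr ST Ss (s * s) /\ th = acos s.
Proof.
  intros [[s [[Hs|Hs] [Sp ->]]] _] Hne; [|subst s; rewrite acos_0 in Hne; tauto].
  exists s. replace (s * s) with (s ^ 2) by ring. auto.
Qed.

Lemma theta_max_S_sub : S_sub_Tperp -> theta_max S Ss T Ts = 0.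
Proof.
  intro Hsub. unfold theta_max. apply Rsup_empty.
  intros [th [Th Hne]]. destruct (Theta_spectrum_pos th Th Hne) as [s [Hs [Sp _]]].
  assert (ST0 : forall x, Ss x -> ST x = hzero)
    by (intros x Sx; unfold ST; rewrite (proj1 (Tperp_iff x) (Hsub x Sx)); apply (proj_zero Ss S hSs hS)).
  apply Sp. exists (hscal (- / (s * s))). repeat split.
  - intros x Sx. apply closed_subspace_scal; auto.
  - exists (Rabs (- / (s * s))). intros x Sx. rewrite hnorm_scal. lra.
  - intros x Sx. rewrite ST0 by auto. apply hvec_ext; intro.
    rewrite hinner_scal, hinner_sub_l, hinner_zero_l, hinner_scal. field. lra.
  - intros x Sx. rewrite ST0 by (apply closed_subspace_scal; auto). apply hvec_ext; intro.
    rewrite hinner_sub_l, hinner_zero_l, !hinner_scal. field. lra.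
Qed.

Lemma theta_max_gamma_pos : ~ S_sub_Tperp -> 0 < gam -> theta_max S Ss T Ts = acos gam.
Proof.
  intros Hn Gp. assert (G1 := proj2 gamma_bounds). unfold theta_max. apply Rsup_max.
  - split; [apply Theta_acos; auto using approx_eigen_gamma_sq|apply acos_pos_neq_PI2; lra].
  - intros th [Th Hne]. destruct (Theta_spectrum_pos th Th Hne) as [s [Hs [Sp ->]]].
    destruct (Rle_or_lt gam s) as [h|h]; [apply acos_le_contravar; lra|].
    exfalso. apply (ST_not_in_spectrum_below (s * s)); auto. split; nra.
Qed.

Lemma theta_max_gamma_zero : ~ S_sub_Tperp -> gam = 0 -> theta_max S Ss T Ts = PI / 2.
Proof.
  intros Hn G0. unfold theta_max. apply Rsup_eq_approx.
  - intros th [Th Hne]. destruct (Theta_spectrum_pos th Th Hne) as [s [Hs [_ ->]]].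
    rewrite <- acos_0. apply acos_le_contravar. lra.
  - intros eps He. set (e := Rmin eps 1).
    assert (He1 : 0 < e <= 1) by (split; [apply Rmin_glb_lt; lra|apply Rmin_r]).
    assert (sn : 0 < sin e) by (apply sin_gt_0; generalize PI2_1; lra).
    destruct (small_approx_eigen (Rmin (1 / 2) (sin e * sin e / 2)) Hn G0) as [lam [[l0 l1] Al]].
    { split; [apply Rmin_glb_lt; nra|apply Rmin_l]. }
    assert (l2 : lam < sin e * sin e) by (generalize (Rmin_r (1 / 2) (sin e * sin e / 2)); nra).
    assert (Ss2 : sqrt lam * sqrt lam = lam) by (apply sqrt_sqrt; lra).
    assert (Sp : 0 < sqrt lam) by (apply sqrt_lt_R0; lra).
    exists (acos (sqrt lam)). split; [split|].
    + apply Theta_acos; auto. rewrite Ss2. exact Al.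
    + apply acos_pos_neq_PI2. split; [lra|]. generalize (Rmin_l (1 / 2) (sin e * sin e / 2)); nra.
    + generalize (acos_gt_of_lt_sin (sqrt lam) e He1 ltac:(split; nra)) (Rmin_l eps 1). fold e. lra.
Qed.

Lemma nu_eq_gamma : (exists r, nu_ratios r) -> Rinf nu_ratios = gam.
Proof.
  intro Hne. assert (GN := gamma_le_nu Hne). assert (N1 := nu_le1 Hne).
  apply Rle_antisym; [|exact GN].
  destruct (classic S_sub_Tperp) as [Hs|Hn]; [rewrite gamma_S_sub; auto|].
  destruct gamma_bounds as [[Gp|G0] G1].
  - destruct G1 as [G1|G1]; [|rewrite G1; exact N1].
    rewrite <- (sqrt_square gam) by lra.
    apply nu_le_sqrt; auto using approx_eigen_gamma_sq. split; nra.
  - rewrite <- G0 in *. apply Rnot_lt_le; intro Hp. set (nu := Rinf nu_ratios) in *.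
    destruct (small_approx_eigen (Rmin (1 / 2) (nu * nu / 2)) Hn (eq_sym G0)) as [lam [[l0 l1] Al]].
    { split; [apply Rmin_glb_lt; nra|apply Rmin_l]. }
    assert (lc1 : lam < 1 / 2) by (generalize (Rmin_l (1 / 2) (nu * nu / 2)); lra).
    assert (lc2 : lam < nu * nu) by (generalize (Rmin_r (1 / 2) (nu * nu / 2)); nra).
    assert (L := nu_le_sqrt lam Hne Al ltac:(lra)). fold nu in L.
    assert (h := sqrt_lt_1_alt lam (nu * nu) ltac:(lra)). rewrite sqrt_square in h by lra. lra.
Qed.

End TwoSubspaces.

Theorem theorem6 (H : HilbertSpace) (Ss Ts : H -> Prop) (S T : H -> H)
    (hSs : closed_subspace Ss) (hTs : closed_subspace Ts)
    (hS : is_orth_proj Ss S) (hT : is_orth_proj Ts T)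
    (hne : exists x : H, (exists y, orth_compl Ts y /\ x = hsub y (S y)) /\ x <> hzero) :
    Rinf (fun r => exists x : H,
            (exists y, orth_compl Ts y /\ x = hsub y (S y)) /\ x <> hzero /\
            r = hnorm (hsub x (T x)) / hnorm x)
      = gamma Ss (orth_compl Ts)
    /\ gamma Ss (orth_compl Ts) = cos (theta_max S Ss T Ts).
Proof.
  split.
  - apply (nu_eq_gamma Ss Ts S T hSs hTs hS hT).
    destruct hne as [x [Hy Hx]]. eexists; exists x; eauto.
  - destruct (classic (S_sub_Tperp Ss Ts)) as [Hs|Hn].
    + rewrite (gamma_S_sub Ss Ts Hs), (theta_max_S_sub Ss Ts S T hSs hTs hS hT Hs), cos_0.
      reflexivity.
    + destruct (gamma_bounds Ss Ts T hSs hTs hT) as [[Gp|G0] G1].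
      * rewrite (theta_max_gamma_pos Ss Ts S T hSs hTs hS hT Hn Gp), cos_acos; auto. lra.
      * rewrite (theta_max_gamma_zero Ss Ts S T hSs hTs hS hT Hn (eq_sym G0)), cos_PI2. auto.
Qed.
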